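(* Let $\omega\in\mathbb C$ with $|\omega|=1$ and let $m\ge1$ be an integer. Then $L_{m,\omega}=\frac im\big(\mathrm{Log}(\omega\mathbf1-L^m)-\mathrm{Log}(\bar\omega\mathbf1-L^{*m})\big)$ is a time operator of $N$ with dense CCR-domain $\mathrm D(NL_{m,\omega})\cap\mathrm D(L_{m,\omega}N)$, i.e. $[N,L_{m,\omega}]=-i\mathbf1$ on this domain.
   Context: $\ell^2=\ell^2(\mathbb N)$, $\mathbb N=\{0,1,\dots\}$, basis $(\xi_n)$; $N\xi_n=n\xi_n$ (self-adjoint, maximal domain); $L$ left shift ($L\xi_n=\xi_{n-1}$, $L\xi_0=0$), $L^*$ right shift. For a linear operator $A$ and $\omega\ne0$: $\mathrm D(\mathrm{Log}(\omega\mathbf1-A))=\{\varphi\in\bigcap_{k\ge0}\mathrm D(A^k):\lim_K\sum_{k=1}^K\frac1k(\omega^{-1}A)^k\varphi\text{ exists}\}$ and $\mathrm{Log}(\omega\mathbf1-A)\varphi=\log(\omega)\varphi-\sum_{k\ge1}\frac1k(\omega^{-1}A)^k\varphi$, with $\log\omega$ a fixed (e.g. principal) logarithm. $L_{m,\omega}$ is defined on the intersection of the two domains. A time operator of a self-adjoint $H$ is a symmetric operator $T$ with $[H,T]=-i\mathbf1$ on some nonzero subspace (CCR-domain) of $\mathrm D(HT)\cap\mathrm D(TH)$. *)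

From Stdlib Require Import Reals.
From Coquelicot Require Import Coquelicot.
Open Scope R_scope.

(* Sequences indexed by N = {0,1,...}; vectors of l^2(N) are those with
   square-summable moduli.  xi_n is the n-th standard basis vector. *)
Definition vec := nat -> C.
Definition vzero : vec := fun _ => RtoC 0.
Definition vadd (x y : vec) : vec := fun n => Cplus (x n) (y n).
Definition vsub (x y : vec) : vec := fun n => Cminus (x n) (y n).
Definition vscal (c : C) (x : vec) : vec := fun n => Cmult c (x n).

Definition in_l2 (x : vec) : Prop := ex_series (fun n => Cmod (x n) ^ 2).
Definition l2norm (x : vec) : R := sqrt (Series (fun n => Cmod (x n) ^ 2)).
(* <x, y> = sum_n conj(x_n) y_n  (antilinear in the first slot) *)
Definition inner (x y : vec) : C :=
  (Series (fun n => Re (Cmult (Cconj (x n)) (y n))),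
   Series (fun n => Im (Cmult (Cconj (x n)) (y n)))).

Definition dense (D : vec -> Prop) : Prop :=
  forall x, in_l2 x -> forall eps, 0 < eps ->
    exists y, D y /\ l2norm (vsub x y) < eps.

Record op := mkOp { dom : vec -> Prop ; app : vec -> vec }.

Definition op_id : op := mkOp in_l2 (fun x => x).
Definition op_comp (A B : op) : op :=
  mkOp (fun x => dom B x /\ dom A (app B x)) (fun x => app A (app B x)).
Fixpoint op_pow (A : op) (k : nat) : op :=
  match k with O => op_id | S k => op_comp A (op_pow A k) end.
Definition op_scal (c : C) (A : op) : op :=
  mkOp (dom A) (fun x => vscal c (app A x)).
Definition op_sub (A B : op) : op :=
  mkOp (fun x => dom A x /\ dom B x) (fun x => vsub (app A x) (app B x)).

Definition Nop : op :=
  mkOp (fun x => in_l2 x /\ in_l2 (fun n => Cmult (RtoC (INR n)) (x n)))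
       (fun x => fun n => Cmult (RtoC (INR n)) (x n)).
(* Left shift L xi_n = xi_{n-1}, L xi_0 = 0, i.e. (Lx)_n = x_{n+1}. *)
Definition Lsh : op := mkOp in_l2 (fun x => fun n => x (S n)).
(* Right shift L^* xi_n = xi_{n+1}, i.e. (L^*x)_0 = 0, (L^*x)_{n+1} = x_n. *)
Definition Rsh : op :=
  mkOp in_l2 (fun x => fun n => match n with O => RtoC 0 | S k => x k end).

Definition Cexp (z : C) : C :=
  (exp (Re z) * cos (Im z), exp (Re z) * sin (Im z)).
Definition is_log (lg : C -> C) : Prop :=
  forall z, z <> RtoC 0 -> Cexp (lg z) = z.

Fixpoint log_psum (w : C) (A : op) (x : vec) (K : nat) : vec :=
  match K with
  | O => vzero
  | S K' => vadd (log_psum w A x K')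
                 (vscal (RtoC (/ INR (S K'))) (app (op_pow (op_scal (Cinv w) A) (S K')) x))
  end.
Definition l2_conv (s : nat -> vec) : Prop :=
  exists y, in_l2 y /\ is_lim_seq (fun K => l2norm (vsub (s K) y)) 0.
(* pointwise limit (coincides with the l^2 limit when the latter exists) *)
Definition vlim (s : nat -> vec) : vec :=
  fun n => (real (Lim_seq (fun K => Re (s K n))), real (Lim_seq (fun K => Im (s K n)))).

(* Log(w 1 - A), with log w given by the fixed logarithm lg. *)
Definition Log (lg : C -> C) (w : C) (A : op) : op :=
  mkOp (fun x => (forall k, dom (op_pow A k) x) /\ l2_conv (log_psum w A x))
       (fun x => vsub (vscal (lg w) x) (vlim (log_psum w A x))).

Definition Lmw (lg : C -> C) (m : nat) (w : C) : op :=
  op_scal (Cdiv Ci (RtoC (INR m)))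
    (op_sub (Log lg w (op_pow Lsh m)) (Log lg (Cconj w) (op_pow Rsh m))).

Definition symmetric (T : op) : Prop :=
  dense (dom T) /\
  forall x y, dom T x -> dom T y -> inner (app T x) y = inner x (app T y).

Definition subspace (D : vec -> Prop) : Prop :=
  D vzero /\ (forall x y, D x -> D y -> D (vadd x y)) /\
  (forall c x, D x -> D (vscal c x)).

Definition time_operator (H T : op) (D : vec -> Prop) : Prop :=
  symmetric T /\ subspace D /\ (exists x, D x /\ x <> vzero) /\
  (forall x, D x -> dom (op_comp H T) x /\ dom (op_comp T H) x) /\
  (forall x, D x -> vsub (app H (app T x)) (app T (app H x)) = vscal (Copp Ci) x).

(* [L^m] and [L^{*m}] are adjoint bounded operators and [log w] is purely imaginary, so
   [L_{m,w}] is Hermitian on its domain.  Commuting [N] with the logarithmic series gives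
   [N L^{mk} - L^{mk} N = -mk L^{mk}]: the [1/k] weights cancel, and [[N, L_{m,w}] x] becomes
   [i (G + H)], with [G], [H] the limits of [sum_k w^{-k} L^{mk} x] and
   [sum_k w^k L^{*mk} x].  These satisfy shifted recurrences forcing [F = x + G + H] to obey
   [F_{n+m} = w F_n]; since [|w| = 1] and [F] is square summable, [F = 0], i.e.
   [[N, L_{m,w}] x = -i x].  The CCR domain contains every [xi_j - w xi_{j+m}]: the
   coefficients [w^q/q] of the two logarithms cancel to [O(1/q^2)], so [N] can be applied.
   Telescoping and Cesaro averaging these vectors approximates each [xi_j] within
   [1/sqrt M], which gives density. *)

From Stdlib Require Import Reals Lra Lia FunctionalExtensionality.
From Coquelicot Require Import Coquelicot.
Open Scope R_scope.

Lemma ex_series_nonneg_le (a b : nat -> R) :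
  (forall n, 0 <= a n <= b n) -> ex_series b -> ex_series a.
Proof.
  intros Hab Hb. apply (ex_series_le a b); auto.
  intros n. change (norm (a n)) with (Rabs (a n)). rewrite Rabs_pos_eq; apply Hab.
Qed.

Lemma ex_series_ext_R (a b : nat -> R) :
  (forall n, a n = b n) -> ex_series a -> ex_series b.
Proof. intros H. apply (ex_series_ext (V:=R_NormedModule)); auto. Qed.

Lemma ex_series_scal_R (c : R) (a : nat -> R) :
  ex_series a -> ex_series (fun n => c * a n).
Proof. apply (ex_series_scal (V:=R_NormedModule) c a). Qed.

Lemma ex_series_plus_R (a b : nat -> R) :
  ex_series a -> ex_series b -> ex_series (fun n => a n + b n).
Proof. apply (ex_series_plus (V:=R_NormedModule)). Qed.

Lemma partial_sum_le_Series (a : nat -> R) N :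
  (forall k, 0 <= a k) -> ex_series a -> sum_f_R0 a N <= Series a.
Proof.
  intros Hpos Ha. apply sum_incr; auto.
  apply Series_correct in Ha. apply is_series_Reals in Ha. exact Ha.
Qed.

Lemma Series_nonneg (a : nat -> R) :
  (forall k, 0 <= a k) -> ex_series a -> 0 <= Series a.
Proof.
  intros Hpos Ha. apply Rle_trans with (sum_f_R0 a 0); [simpl; auto|].
  apply partial_sum_le_Series; auto.
Qed.

Lemma Series_ge_term (a : nat -> R) n :
  (forall k, 0 <= a k) -> ex_series a -> a n <= Series a.
Proof.
  intros Hpos Ha. apply Rle_trans with (sum_f_R0 a n).
  - destruct n; [simpl; lra|]. rewrite tech5.
    assert (0 <= sum_f_R0 a n) by (apply cond_pos_sum; auto). lra.
  - apply partial_sum_le_Series; auto.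
Qed.

Lemma Series_tail_lt (a : nat -> R) :
  (forall k, 0 <= a k) -> ex_series a ->
  forall eps, 0 < eps -> exists K0, forall K, (K0 <= K)%nat ->
    Series (fun k => a (K + k)%nat) < eps.
Proof.
  intros Hpos Ha eps Heps.
  assert (Hc := Series_correct _ Ha). apply is_series_Reals in Hc.
  destruct (Hc eps Heps) as [N HN].
  exists (S N). intros [|K] HK; [lia|].
  specialize (HN K ltac:(lia)). unfold R_dist in HN.
  rewrite (Series_incr_n a (S K)) in HN by (lia || auto). simpl pred in HN.
  assert (0 <= Series (fun k => a (S K + k)%nat)).
  { apply Series_nonneg; auto. apply ex_series_incr_n; auto. }
  rewrite Rabs_minus_sym in HN.
  replace (sum_f_R0 a K + Series (fun k => a (S K + k)%nat) - sum_f_R0 a K)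
    with (Series (fun k => a (S K + k)%nat)) in HN by ring.
  rewrite Rabs_pos_eq in HN by lra. exact HN.
Qed.

Lemma ex_series_inv_succ_sq : ex_series (fun n => / (INR n + 1) ^ 2).
Proof.
  apply ex_series_nonneg_le with (fun n => 2 * (/ (INR n + 1) - / (INR n + 2))).
  { intros n. assert (0 <= INR n) by apply pos_INR. split.
    - apply Rlt_le, Rinv_0_lt_compat. nra.
    - assert (E : / (INR n + 1) - / (INR n + 2) = / ((INR n + 1) * (INR n + 2)))
        by (field; lra).
      rewrite E. apply Rmult_le_reg_l with ((INR n + 1) ^ 2 * (INR n + 2)); [nra|].
      field_simplify; nra. }
  apply ex_series_scal_R.
  (* telescoping: the partial sums are 1 - 1/(N+2) *)
  exists 1. apply is_series_Reals. intros eps Heps.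
  assert (Hs : forall N,
    sum_f_R0 (fun n => / (INR n + 1) - / (INR n + 2)) N = 1 - / (INR N + 2)).
  { induction N; [simpl; field|]. rewrite tech5, IHN, S_INR.
    assert (0 <= INR N) by apply pos_INR. field; lra. }
  destruct (INR_unbounded (/ eps)) as [N0 HN0].
  exists N0. intros n Hn. unfold R_dist. rewrite Hs.
  assert (0 <= INR n) by apply pos_INR.
  assert (INR N0 <= INR n) by (apply le_INR; lia).
  replace (1 - / (INR n + 2) - 1) with (- / (INR n + 2)) by ring.
  rewrite Rabs_Ropp, Rabs_pos_eq by (apply Rlt_le, Rinv_0_lt_compat; lra).
  rewrite <- (Rinv_inv eps). apply Rinv_lt_contravar; [|lra].
  apply Rmult_lt_0_compat; [apply Rinv_0_lt_compat|]; lra.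
Qed.

Lemma ex_series_0 : ex_series (fun _ : nat => 0).
Proof.
  apply ex_series_nonneg_le with (2 := ex_series_inv_succ_sq). intros n.
  split; [lra|]. apply Rlt_le, Rinv_0_lt_compat, pow_lt.
  pose proof (pos_INR n). lra.
Qed.

Lemma Series_0 : Series (fun _ : nat => 0) = 0.
Proof. rewrite (Series_ext _ (fun _ => 0 * 0)) by (intros; ring). rewrite Series_scal_l. ring. Qed.

Lemma ex_series_finsupp (a : nat -> R) P :
  (forall n, (P <= n)%nat -> a n = 0) -> ex_series a.
Proof.
  intros Ha. apply (ex_series_incr_n a P).
  apply ex_series_ext_R with (2 := ex_series_0). intros n. rewrite Ha by lia. reflexivity.
Qed.

Lemma Series_finsupp_le (a : nat -> R) P c :
  (forall n, 0 <= a n <= c) -> (forall n, (P <= n)%nat -> a n = 0) ->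
  Series a <= INR P * c.
Proof.
  intros Hb Hz. destruct P as [|P].
  - rewrite (Series_ext _ (fun _ => 0)) by (intros; apply Hz; lia). rewrite Series_0.
    simpl; lra.
  - rewrite (Series_incr_n a (S P)) by (lia || apply (ex_series_finsupp a (S P) Hz)).
    simpl pred. rewrite (Series_ext _ (fun _ => 0)) by (intros; apply Hz; lia).
    rewrite Series_0, Rplus_0_r.
    eapply Rle_trans; [apply (sum_Rle _ (fun _ => c)); intros; apply Hb|].
    rewrite sum_cte. lra.
Qed.

Lemma is_lim_seq_of_sub (u : nat -> R) c :
  is_lim_seq (fun K => u K - c) 0 -> is_lim_seq u c.
Proof.
  intros H. apply is_lim_seq_ext with (fun K => (u K - c) + c); [intros; ring|].
  pose proof (is_lim_seq_plus' _ _ 0 c H (is_lim_seq_const c)) as H2.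
  rewrite Rplus_0_l in H2. exact H2.
Qed.

Lemma is_lim_seq_scal_fin (u : nat -> R) c (l : R) :
  is_lim_seq u l -> is_lim_seq (fun n => c * u n) (c * l).
Proof. intros H. apply (is_lim_seq_scal_l u c l) in H. exact H. Qed.

Lemma is_lim_seq_0_of_weighted_bound (d q : nat -> R) B : 0 <= B ->
  (forall K t, 0 < t -> Rabs (d K) <= t * q K + B / t) ->
  is_lim_seq q 0 -> is_lim_seq d 0.
Proof.
  intros HB Hb Hq. apply is_lim_seq_spec in Hq. apply is_lim_seq_spec.
  intros eps. pose proof (cond_pos eps).
  set (t := (2 * B + 1) / eps).
  assert (Ht : 0 < t) by (unfold t; apply Rdiv_lt_0_compat; lra).
  assert (He : 0 < eps / (2 * t)) by (apply Rdiv_lt_0_compat; lra).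
  destruct (Hq (mkposreal _ He)) as [N HN]. exists N. intros K HK.
  specialize (HN K HK). simpl in HN. rewrite Rminus_0_r in *.
  specialize (Hb K t Ht).
  assert (t * q K < eps / 2).
  { apply Rle_lt_trans with (t * Rabs (q K)).
    - apply Rmult_le_compat_l; [lra| apply Rle_abs].
    - apply Rlt_le_trans with (t * (eps / (2 * t))); [apply Rmult_lt_compat_l; auto|].
      right; field; lra. }
  assert (B / t < eps / 2).
  { unfold t. replace (B / ((2 * B + 1) / eps)) with (B * eps / (2 * B + 1)) by (field; lra).
    apply Rmult_lt_reg_r with (2 * B + 1); [lra|]. field_simplify; nra. }
  lra.
Qed.

Ltac Cring := apply injective_projections; simpl; ring.
Ltac Cfield := apply injective_projections; simpl; field.

Lemma Cmod_sq_plus_le (a b : C) : Cmod (a + b) ^ 2 <= 2 * Cmod a ^ 2 + 2 * Cmod b ^ 2.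
Proof.
  rewrite !Cmod2_alt. destruct a as [a1 a2], b as [b1 b2]. unfold Re, Im; simpl.
  pose proof (pow2_ge_0 (a1 - b1)); pose proof (pow2_ge_0 (a2 - b2)). nra.
Qed.

Lemma Cmod_sq_mult (a b : C) : Cmod (a * b) ^ 2 = Cmod a ^ 2 * Cmod b ^ 2.
Proof. rewrite Cmod_mult. ring. Qed.

Lemma Cmod_sq_ge0 (a : C) : 0 <= Cmod a ^ 2.
Proof. apply pow2_ge_0. Qed.

Lemma im_le_Cmod (z : C) : Rabs (Im z) <= Cmod z.
Proof.
  destruct z as [a b]. unfold Cmod, Im; simpl. rewrite <- sqrt_Rsqr_abs.
  apply sqrt_le_1_alt. unfold Rsqr. nra.
Qed.

Lemma Cmod_conj_mult_le_weighted (a b : C) t : 0 < t ->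
  Cmod (Cconj a * b) <= t / 2 * Cmod a ^ 2 + / (2 * t) * Cmod b ^ 2.
Proof.
  intros Ht. rewrite Cmod_mult, Cmod_conj.
  assert (E : t / 2 * Cmod a ^ 2 + / (2 * t) * Cmod b ^ 2 - Cmod a * Cmod b =
              / (2 * t) * (t * Cmod a - Cmod b) ^ 2) by (field; lra).
  assert (0 <= / (2 * t) * (t * Cmod a - Cmod b) ^ 2).
  { apply Rmult_le_pos; [apply Rlt_le, Rinv_0_lt_compat; lra| apply pow2_ge_0]. }
  lra.
Qed.

Lemma Cmod_conj_mult_le (a b : C) : Cmod (Cconj a * b) <= (Cmod a ^ 2 + Cmod b ^ 2) / 2.
Proof.
  eapply Rle_trans; [apply (Cmod_conj_mult_le_weighted a b 1); lra|]. right; field.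
Qed.

Lemma Cconj_RtoC (r : R) : Cconj (RtoC r) = RtoC r.
Proof. Cring. Qed.

Lemma unit_Cmod_neq0 (w : C) : Cmod w = 1 -> w <> RtoC 0.
Proof. intros Hw ->. rewrite Cmod_0 in Hw. lra. Qed.

Lemma unit_Cmod_Cinv (w : C) : Cmod w = 1 -> Cinv w = Cconj w.
Proof.
  intros Hw. assert (E : (w * Cconj w)%C = 1%C).
  { rewrite <- Cmod2_conj, Hw. Cring. }
  replace (Cinv w) with (Cinv w * (w * Cconj w))%C by (rewrite E; ring).
  field. apply unit_Cmod_neq0; auto.
Qed.

Lemma unit_Cmod_Cinv_conj (w : C) : Cmod w = 1 -> Cinv (Cconj w) = w.
Proof.
  intros Hw. rewrite unit_Cmod_Cinv by (rewrite Cmod_conj; auto). apply Cconj_conj.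
Qed.

Lemma is_log_Re_unit (lg : C -> C) z : is_log lg -> Cmod z = 1 -> Re (lg z) = 0.
Proof.
  intros Hl Hz. rewrite <- (Hl z (unit_Cmod_neq0 z Hz)) in Hz.
  assert (E : forall e t, sqrt ((e * cos t) ^ 2 + (e * sin t) ^ 2) = Rabs e).
  { intros e t. rewrite <- sqrt_Rsqr_abs. f_equal.
    replace ((e * cos t) ^ 2 + (e * sin t) ^ 2) with (e * e * ((sin t)² + (cos t)²))
      by (unfold Rsqr; ring).
    rewrite sin2_cos2. unfold Rsqr; ring. }
  unfold Cexp, Cmod in Hz. cbn [fst snd] in Hz. rewrite E in Hz.
  rewrite Rabs_pos_eq in Hz by (apply Rlt_le, exp_pos).
  rewrite <- (ln_exp (Re (lg z))), Hz. apply ln_1.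
Qed.

Definition Clim (u : nat -> C) (l : C) : Prop :=
  is_lim_seq (fun n => Re (u n)) (Re l) /\ is_lim_seq (fun n => Im (u n)) (Im l).

Lemma Clim_ext u v l : (forall n, u n = v n) -> Clim u l -> Clim v l.
Proof.
  intros H [H1 H2]; split; eapply is_lim_seq_ext; eauto; intros n; simpl; rewrite H; auto.
Qed.

Lemma Clim_const c : Clim (fun _ => c) c.
Proof. split; apply is_lim_seq_const. Qed.

Lemma Clim_plus u v a b : Clim u a -> Clim v b -> Clim (fun n => u n + v n)%C (a + b)%C.
Proof.
  intros [H1 H2] [H3 H4]; split.
  - apply (is_lim_seq_plus' _ _ _ _ H1 H3).
  - apply (is_lim_seq_plus' _ _ _ _ H2 H4).
Qed.

Lemma Clim_scal c u a : Clim u a -> Clim (fun n => c * u n)%C (c * a)%C.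
Proof.
  intros [H1 H2]; destruct c as [c1 c2], a as [a1 a2]; split.
  - apply is_lim_seq_ext with (fun n => c1 * Re (u n) - c2 * Im (u n)).
    { intros n; destruct (u n); unfold Re, Im; simpl; ring. }
    apply is_lim_seq_minus'; apply is_lim_seq_scal_fin; auto.
  - apply is_lim_seq_ext with (fun n => c1 * Im (u n) + c2 * Re (u n)).
    { intros n; destruct (u n); unfold Re, Im; simpl; ring. }
    apply is_lim_seq_plus'; apply is_lim_seq_scal_fin; auto.
Qed.

Lemma Clim_minus u v a b : Clim u a -> Clim v b -> Clim (fun n => u n - v n)%C (a - b)%C.
Proof.
  intros Ha Hb. apply (Clim_ext (fun n => u n + (-1) * v n)%C); [intros; ring|].
  replace (a - b)%C with (a + (-1) * b)%C by ring.
  apply Clim_plus, Clim_scal; auto.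
Qed.

Lemma Clim_conj u a : Clim u a -> Clim (fun n => Cconj (u n)) (Cconj a).
Proof.
  intros [H1 H2]. split; [exact H1|].
  apply is_lim_seq_opp in H2. exact H2.
Qed.

Lemma Clim_unique u a b : Clim u a -> Clim u b -> a = b.
Proof.
  intros [H1 H2] [H3 H4].
  apply is_lim_seq_unique in H1, H2, H3, H4.
  rewrite H1 in H3; rewrite H2 in H4. injection H3; injection H4; intros.
  destruct a, b; unfold Re, Im in *; simpl in *; subst; auto.
Qed.

Lemma Clim_S u a : Clim u a -> Clim (fun n => u (S n)) a.
Proof.
  intros [H1 H2]; split.
  - apply (is_lim_seq_incr_1 (fun n => Re (u n))) in H1. exact H1.
  - apply (is_lim_seq_incr_1 (fun n => Im (u n))) in H2. exact H2.
Qed.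

Lemma vlim_eq (s : nat -> vec) y :
  (forall n, Clim (fun K => s K n) (y n)) -> vlim s = y.
Proof.
  intros H. apply functional_extensionality; intros n. destruct (H n) as [H1 H2].
  unfold vlim. apply is_lim_seq_unique in H1, H2. rewrite H1, H2. simpl.
  destruct (y n); auto.
Qed.

Lemma in_l2_ext x y : (forall n, x n = y n) -> in_l2 x -> in_l2 y.
Proof. intros H. replace y with x; auto. apply functional_extensionality; auto. Qed.

Lemma in_l2_finsupp (x : vec) P : (forall n, (P <= n)%nat -> x n = RtoC 0) -> in_l2 x.
Proof.
  intros H. apply (ex_series_finsupp _ P). intros n Hn. rewrite H by auto.
  rewrite Cmod_0. ring.
Qed.

Lemma in_l2_zero : in_l2 vzero.
Proof. apply (in_l2_finsupp _ 0). reflexivity. Qed.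

Lemma in_l2_add x y : in_l2 x -> in_l2 y -> in_l2 (vadd x y).
Proof.
  intros Hx Hy.
  apply ex_series_nonneg_le with (fun n => 2 * Cmod (x n) ^ 2 + 2 * Cmod (y n) ^ 2).
  - intros n; split; [apply Cmod_sq_ge0| apply Cmod_sq_plus_le].
  - apply ex_series_plus_R; apply ex_series_scal_R; auto.
Qed.

Lemma in_l2_scal c x : in_l2 x -> in_l2 (vscal c x).
Proof.
  intros Hx. apply ex_series_ext_R with (fun n => Cmod c ^ 2 * Cmod (x n) ^ 2).
  - intros n; unfold vscal; rewrite Cmod_sq_mult; auto.
  - apply ex_series_scal_R; auto.
Qed.

Lemma in_l2_sub x y : in_l2 x -> in_l2 y -> in_l2 (vsub x y).
Proof.
  intros Hx Hy. apply in_l2_ext with (vadd x (vscal (-1) y)).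
  - intros n. unfold vsub, vadd, vscal. ring.
  - apply in_l2_add, in_l2_scal; auto.
Qed.

Lemma l2norm_sq x : in_l2 x -> l2norm x ^ 2 = Series (fun n => Cmod (x n) ^ 2).
Proof.
  intros H. unfold l2norm. rewrite <- Rsqr_pow2. apply Rsqr_sqrt.
  apply Series_nonneg; auto. intros; apply Cmod_sq_ge0.
Qed.

Lemma l2norm_ge0 x : 0 <= l2norm x.
Proof. apply sqrt_pos. Qed.

Lemma Cmod_le_l2norm x n : in_l2 x -> Cmod (x n) <= l2norm x.
Proof.
  intros H. unfold l2norm. rewrite <- (sqrt_pow2 (Cmod (x n))) by apply Cmod_ge_0.
  apply sqrt_le_1_alt. apply (Series_ge_term (fun n => Cmod (x n) ^ 2)); auto.
  intros; apply Cmod_sq_ge0.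
Qed.

Lemma l2norm_scal c x : in_l2 x -> l2norm (vscal c x) = Cmod c * l2norm x.
Proof.
  intros H. unfold l2norm, vscal.
  rewrite (Series_ext _ (fun n => Cmod c ^ 2 * Cmod (x n) ^ 2))
    by (intros; apply Cmod_sq_mult).
  rewrite Series_scal_l, sqrt_mult, sqrt_pow2 by
    (apply Cmod_ge_0 || apply pow2_ge_0 || (apply Series_nonneg; auto; intros; apply Cmod_sq_ge0)).
  reflexivity.
Qed.

Lemma l2norm_add_le x y : in_l2 x -> in_l2 y ->
  l2norm (vadd x y) <= sqrt 2 * (l2norm x + l2norm y).
Proof.
  intros Hx Hy. pose proof (l2norm_ge0 x); pose proof (l2norm_ge0 y).
  assert (E2 : forall z, ex_series (fun n => 2 * Cmod (z n) ^ 2) <-> in_l2 z).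
  { intros z; split; [|apply ex_series_scal_R].
    intros Hz. apply ex_series_ext_R with (fun n => / 2 * (2 * Cmod (z n) ^ 2)).
    intros; field. apply ex_series_scal_R; auto. }
  apply Rsqr_incr_0_var; [|apply Rmult_le_pos; [apply sqrt_pos|lra]].
  rewrite !Rsqr_pow2, Rpow_mult_distr, pow2_sqrt by lra.
  apply Rle_trans with (2 * l2norm x ^ 2 + 2 * l2norm y ^ 2); [|nra].
  rewrite !l2norm_sq by (auto using in_l2_add).
  rewrite <- !Series_scal_l, <- Series_plus by (apply E2; auto).
  apply Series_le.
  - intros n; split; [apply Cmod_sq_ge0| apply Cmod_sq_plus_le].
  - apply ex_series_plus_R; apply E2; auto.
Qed.

Lemma l2norm_lt_of_Series (v : vec) d : 0 < d -> in_l2 v ->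
  Series (fun n => Cmod (v n) ^ 2) < d ^ 2 -> l2norm v < d.
Proof.
  intros Hd Hv Hs. rewrite <- l2norm_sq in Hs by auto. pose proof (l2norm_ge0 v).
  apply Rnot_le_lt. intros Hc. assert (d ^ 2 <= l2norm v ^ 2) by (apply pow_incr; lra).
  lra.
Qed.

Definition conv_to (s : nat -> vec) (y : vec) : Prop :=
  in_l2 y /\ is_lim_seq (fun K => l2norm (vsub (s K) y)) 0.

Lemma conv_to_pointwise (s : nat -> vec) y :
  (forall K, in_l2 (s K)) -> conv_to s y -> forall n, Clim (fun K => s K n) (y n).
Proof.
  intros Hs [Hy Hl] n.
  assert (Hb : forall K, Cmod (s K n - y n) <= l2norm (vsub (s K) y)).
  { intros K. apply (Cmod_le_l2norm (vsub (s K) y)). apply in_l2_sub; auto. }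
  assert (Hl' : is_lim_seq (fun K => - l2norm (vsub (s K) y)) 0).
  { apply is_lim_seq_opp in Hl. simpl in Hl. rewrite Ropp_0 in Hl. exact Hl. }
  split; apply is_lim_seq_of_sub;
    apply is_lim_seq_le_le with (2 := Hl') (3 := Hl); intros K;
    specialize (Hb K); apply Rabs_le_between.
  - pose proof (re_le_Cmod (s K n - y n)%C) as H.
    change (Re (s K n - y n)%C) with (Re (s K n) - Re (y n)) in H. lra.
  - pose proof (im_le_Cmod (s K n - y n)%C) as H.
    change (Im (s K n - y n)%C) with (Im (s K n) - Im (y n)) in H. lra.
Qed.

Lemma conv_to_vlim s y : (forall K, in_l2 (s K)) -> conv_to s y -> vlim s = y.
Proof. intros Hs Hc. apply vlim_eq, conv_to_pointwise; auto. Qed.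

Lemma conv_to_add s t ys yt : (forall K, in_l2 (s K)) -> (forall K, in_l2 (t K)) ->
  conv_to s ys -> conv_to t yt -> conv_to (fun K => vadd (s K) (t K)) (vadd ys yt).
Proof.
  intros Hs Ht [Hys Hs'] [Hyt Ht']. split; [apply in_l2_add; auto|].
  apply is_lim_seq_le_le with (fun _ => 0)
    (fun K => sqrt 2 * (l2norm (vsub (s K) ys) + l2norm (vsub (t K) yt))).
  - intros K. split; [apply l2norm_ge0|].
    replace (vsub (vadd (s K) (t K)) (vadd ys yt)) with (vadd (vsub (s K) ys) (vsub (t K) yt)).
    + apply l2norm_add_le; apply in_l2_sub; auto.
    + apply functional_extensionality; intros; unfold vsub, vadd; ring.
  - apply is_lim_seq_const.
  - replace (Finite 0) with (Finite (sqrt 2 * (0 + 0))) by (f_equal; ring).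
    apply is_lim_seq_scal_fin, is_lim_seq_plus'; auto.
Qed.

Lemma conv_to_scal s y c : (forall K, in_l2 (s K)) ->
  conv_to s y -> conv_to (fun K => vscal c (s K)) (vscal c y).
Proof.
  intros Hs [Hy Hl]. split; [apply in_l2_scal; auto|].
  apply is_lim_seq_ext with (fun K => Cmod c * l2norm (vsub (s K) y)).
  - intros K. rewrite <- l2norm_scal by (apply in_l2_sub; auto). f_equal.
    apply functional_extensionality; intros; unfold vsub, vscal; ring.
  - replace (Finite 0) with (Finite (Cmod c * 0)) by (f_equal; ring).
    apply is_lim_seq_scal_fin; auto.
Qed.

Lemma conv_to_eventually_const s y K0 :
  in_l2 y -> (forall K, (K0 <= K)%nat -> s K = y) -> conv_to s y.
Proof.
  intros Hy H. split; auto. apply (is_lim_seq_incr_n _ K0).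
  apply is_lim_seq_ext with (fun _ => 0); [|apply is_lim_seq_const].
  intros K. rewrite H by lia. replace (vsub y y) with (vscal 0 y).
  - rewrite l2norm_scal, Cmod_0 by auto. ring.
  - apply functional_extensionality; intros; unfold vsub, vscal; ring.
Qed.

(* The squared error at stage [K] is bounded by the tail of [F] beyond [K]. *)
Lemma conv_to_dominated (s : nat -> vec) y (F : nat -> R) :
  (forall K, in_l2 (s K)) -> in_l2 y -> (forall k, 0 <= F k) -> ex_series F ->
  (forall K n, Cmod (s K n - y n) ^ 2 <= F n) ->
  (forall K n, (n < K)%nat -> s K n = y n) -> conv_to s y.
Proof.
  intros Hs Hy HF0 HF Hb Hz. split; auto.
  apply is_lim_seq_spec. intros eps. pose proof (cond_pos eps).
  assert (He2 : 0 < eps ^ 2) by (apply pow_lt; auto).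
  destruct (Series_tail_lt F HF0 HF _ He2) as [K0 HK0]. exists K0. intros K HK.
  rewrite Rminus_0_r, Rabs_pos_eq by apply l2norm_ge0.
  apply l2norm_lt_of_Series; [auto|apply in_l2_sub; auto|].
  eapply Rle_lt_trans; [|apply (HK0 K HK)].
  rewrite (Series_incr_n_aux _ K).
  - apply Series_le; [|apply (ex_series_incr_n F K); auto].
    intros n; split; [apply Cmod_sq_ge0| apply Hb].
  - intros k Hk. unfold vsub. rewrite Hz by auto.
    replace (y k - y k)%C with (RtoC 0) by ring. rewrite Cmod_0. ring.
Qed.

Lemma Rabs_Series_le (u g : nat -> R) :
  (forall n, Rabs (u n) <= g n) -> ex_series g -> Rabs (Series u) <= Series g.
Proof.
  intros Hug Hg.
  assert (Hu : ex_series (fun n => Rabs (u n)))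
    by (apply ex_series_nonneg_le with (2 := Hg); intros n; split; [apply Rabs_pos|auto]).
  eapply Rle_trans; [apply Series_Rabs; auto|].
  apply Series_le; auto. intros n; split; [apply Rabs_pos|auto].
Qed.

Lemma ex_series_inner a b : in_l2 a -> in_l2 b ->
  ex_series (fun n => Re (Cconj (a n) * b n)) /\ ex_series (fun n => Im (Cconj (a n) * b n)).
Proof.
  intros Ha Hb.
  assert (E : ex_series (fun n => (Cmod (a n) ^ 2 + Cmod (b n) ^ 2) / 2)).
  { apply ex_series_ext_R with (fun n => / 2 * (Cmod (a n) ^ 2 + Cmod (b n) ^ 2)).
    - intros; field.
    - apply ex_series_scal_R, ex_series_plus_R; auto. }
  split; apply ex_series_Rabs, ex_series_nonneg_le with (2 := E); intros n;
    (split; [apply Rabs_pos|]); eapply Rle_trans; try apply Cmod_conj_mult_le.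
  - apply re_le_Cmod.
  - apply im_le_Cmod.
Qed.

Lemma inner_add_l a a' b : in_l2 a -> in_l2 a' -> in_l2 b ->
  inner (vadd a a') b = (inner a b + inner a' b)%C.
Proof.
  intros Ha Ha' Hb. destruct (ex_series_inner a b Ha Hb) as [A1 A2].
  destruct (ex_series_inner a' b Ha' Hb) as [B1 B2].
  unfold inner. apply injective_projections; simpl;
    rewrite <- Series_plus by auto; apply Series_ext; intros n; unfold vadd;
    simpl; ring.
Qed.

Lemma inner_conj a b : inner b a = Cconj (inner a b).
Proof.
  unfold inner, Cconj. apply injective_projections; simpl.
  - apply Series_ext; intros n; simpl. ring.
  - rewrite <- Series_opp. apply Series_ext; intros n; simpl. ring.
Qed.

Lemma inner_add_r a b b' : in_l2 a -> in_l2 b -> in_l2 b' ->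
  inner a (vadd b b') = (inner a b + inner a b')%C.
Proof.
  intros Ha Hb Hb'. rewrite inner_conj, inner_add_l, (inner_conj a b), (inner_conj a b')
    by auto.
  rewrite Cplus_conj, !Cconj_conj. reflexivity.
Qed.

Lemma inner_scal_l c a b : in_l2 a -> in_l2 b ->
  inner (vscal c a) b = (Cconj c * inner a b)%C.
Proof.
  intros Ha Hb. destruct (ex_series_inner a b Ha Hb) as [A1 A2].
  destruct c as [c1 c2].
  assert (S1 := ex_series_scal_R c1 _ A1). assert (S2 := ex_series_scal_R (-c2) _ A2).
  assert (S3 := ex_series_scal_R c1 _ A2). assert (S4 := ex_series_scal_R (-c2) _ A1).
  unfold inner. apply injective_projections; simpl; rewrite <- !Series_scal_l.
  - rewrite <- Series_minus by auto. apply Series_ext; intros n; unfold vscal; simpl; ring.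
  - rewrite <- Series_plus by auto. apply Series_ext; intros n; unfold vscal; simpl; ring.
Qed.

Lemma inner_scal_r c a b : in_l2 a -> in_l2 b ->
  inner a (vscal c b) = (c * inner a b)%C.
Proof.
  intros Ha Hb. rewrite inner_conj, inner_scal_l, (inner_conj a b) by auto.
  rewrite Cmult_conj, !Cconj_conj. reflexivity.
Qed.

Lemma inner_zero_l b : in_l2 b -> inner vzero b = RtoC 0.
Proof.
  intros Hb. replace vzero with (vscal 0 vzero).
  - rewrite inner_scal_l by (auto using in_l2_zero). Cring.
  - apply functional_extensionality; intros; unfold vscal, vzero; ring.
Qed.

Lemma inner_zero_r a : in_l2 a -> inner a vzero = RtoC 0.
Proof. intros Ha. rewrite inner_conj, inner_zero_l by auto. Cring. Qed.

Lemma inner_sub_l a a' b : in_l2 a -> in_l2 a' -> in_l2 b ->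
  inner (vsub a a') b = (inner a b - inner a' b)%C.
Proof.
  intros Ha Ha' Hb. replace (vsub a a') with (vadd a (vscal (-1) a')).
  - rewrite inner_add_l, inner_scal_l by (auto using in_l2_scal). Cring.
  - apply functional_extensionality; intros; unfold vsub, vadd, vscal; ring.
Qed.

Lemma inner_parts_abs_le a b t : in_l2 a -> in_l2 b -> 0 < t ->
  Rabs (Re (inner a b)) <= t * (/ 2 * l2norm a ^ 2) + / 2 * l2norm b ^ 2 / t /\
  Rabs (Im (inner a b)) <= t * (/ 2 * l2norm a ^ 2) + / 2 * l2norm b ^ 2 / t.
Proof.
  intros Ha Hb Ht. destruct (ex_series_inner a b Ha Hb) as [E1 E2].
  assert (Ew : ex_series (fun n => t / 2 * Cmod (a n) ^ 2 + / (2 * t) * Cmod (b n) ^ 2))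
    by (apply ex_series_plus_R; apply ex_series_scal_R; auto).
  assert (Hw : t * (/ 2 * l2norm a ^ 2) + / 2 * l2norm b ^ 2 / t =
    Series (fun n => t / 2 * Cmod (a n) ^ 2 + / (2 * t) * Cmod (b n) ^ 2)).
  { rewrite Series_plus, !Series_scal_l, !l2norm_sq by (auto; apply ex_series_scal_R; auto).
    field. lra. }
  rewrite Hw. unfold inner.
  split; apply Rabs_Series_le; auto; intros n;
    (eapply Rle_trans; [|apply Cmod_conj_mult_le_weighted; auto]).
  - apply re_le_Cmod.
  - apply im_le_Cmod.
Qed.

Lemma Clim_inner_l (s : nat -> vec) y b : (forall K, in_l2 (s K)) -> conv_to s y ->
  in_l2 b -> Clim (fun K => inner (s K) b) (inner y b).
Proof.
  intros Hs [Hy Hl] Hb.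
  assert (Hq : is_lim_seq (fun K => / 2 * l2norm (vsub (s K) y) ^ 2) 0).
  { replace (Finite 0) with (Finite (/ 2 * (0 * 0))) by (f_equal; ring).
    apply is_lim_seq_scal_fin.
    apply is_lim_seq_ext with (fun K => l2norm (vsub (s K) y) * l2norm (vsub (s K) y)).
    - intros; ring.
    - apply is_lim_seq_mult'; auto. }
  assert (HB : 0 <= / 2 * l2norm b ^ 2) by (apply Rmult_le_pos; [lra| apply pow2_ge_0]).
  pose proof (fun K t (Ht : 0 < t) =>
    inner_parts_abs_le (vsub (s K) y) b t (in_l2_sub _ _ (Hs K) Hy) Hb Ht) as Hd.
  split; apply is_lim_seq_of_sub;
    apply (is_lim_seq_0_of_weighted_bound _ _ _ HB) with (2 := Hq); intros K t Ht;
    specialize (Hd K t Ht); rewrite inner_sub_l in Hd by auto; apply Hd.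
Qed.

Lemma Clim_inner_r (s : nat -> vec) y a : (forall K, in_l2 (s K)) -> conv_to s y ->
  in_l2 a -> Clim (fun K => inner a (s K)) (inner a y).
Proof.
  intros Hs Hc Ha.
  apply Clim_ext with (fun K => Cconj (inner (s K) a)); [intros; symmetry; apply inner_conj|].
  rewrite inner_conj. apply Clim_conj, Clim_inner_l; auto.
Qed.

Definition l2_total (A : op) : Prop :=
  (forall y, dom A y <-> in_l2 y) /\ (forall y, in_l2 y -> in_l2 (app A y)).

Definition op_linear (A : op) : Prop :=
  (forall x y, app A (vadd x y) = vadd (app A x) (app A y)) /\
  (forall c x, app A (vscal c x) = vscal c (app A x)).

Definition op_adjoint (A B : op) : Prop :=
  forall a b, in_l2 a -> in_l2 b -> inner (app A a) b = inner a (app B b).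

Lemma l2_total_pow A k : l2_total A -> l2_total (op_pow A k).
Proof.
  intros [HA1 HA2]. induction k as [|k [IH1 IH2]]; [split; simpl; tauto|].
  split; simpl; auto.
  intros y. rewrite IH1. split; [tauto|]. intros H; split; auto. apply HA1; auto.
Qed.

Lemma l2_total_scal c A : l2_total A -> l2_total (op_scal c A).
Proof. intros [H1 H2]; split; simpl; auto. intros; apply in_l2_scal; auto. Qed.

Lemma l2_total_Lsh : l2_total Lsh.
Proof.
  split; simpl; [tauto|]. intros y Hy.
  apply (ex_series_incr_1 (fun n => Cmod (y n) ^ 2)) in Hy. exact Hy.
Qed.

Lemma l2_total_Rsh : l2_total Rsh.
Proof.
  split; simpl; [tauto|]. intros y Hy.
  apply (ex_series_incr_1 (V:=R_NormedModule)). exact Hy.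
Qed.

Lemma op_linear_pow A k : op_linear A -> op_linear (op_pow A k).
Proof.
  intros [H1 H2]. induction k as [|k [IH1 IH2]]; [split; reflexivity|].
  split; simpl; intros; [rewrite IH1, H1 | rewrite IH2, H2]; auto.
Qed.

Lemma op_linear_scal c A : op_linear A -> op_linear (op_scal c A).
Proof.
  intros [H1 H2]; split; simpl; intros; [rewrite H1 | rewrite H2];
    apply functional_extensionality; intros n; unfold vscal, vadd; ring.
Qed.

Lemma op_linear_Lsh : op_linear Lsh.
Proof. split; reflexivity. Qed.

Lemma op_linear_Rsh : op_linear Rsh.
Proof.
  split; simpl; intros; apply functional_extensionality; intros [|n];
    unfold vscal, vadd; auto; ring.
Qed.

Lemma op_adjoint_Lsh_Rsh : op_adjoint Lsh Rsh.
Proof.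
  intros a b Ha Hb. unfold inner. f_equal;
    (etransitivity; [|symmetry; apply Series_incr_1_aux]; [reflexivity|]);
    simpl; unfold Re, Im; simpl; ring.
Qed.

Lemma app_op_pow_S A k x : app (op_pow A (S k)) x = app (op_pow A k) (app A x).
Proof.
  induction k; [reflexivity|].
  change (app (op_pow A (S (S k))) x) with (app A (app (op_pow A (S k)) x)).
  rewrite IHk. reflexivity.
Qed.

Lemma op_adjoint_pow A B k : l2_total A -> l2_total B -> op_adjoint A B ->
  op_adjoint (op_pow A k) (op_pow B k).
Proof.
  intros GA GB H. induction k as [|k IH]; intros a b Ha Hb; [reflexivity|].
  change (app (op_pow A (S k)) a) with (app A (app (op_pow A k) a)).
  rewrite H, IH, app_op_pow_S; auto.
  - apply GB; auto.
  - apply (l2_total_pow A k GA); auto.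
Qed.

Lemma op_adjoint_scal A B c : l2_total A -> l2_total B -> op_adjoint A B ->
  op_adjoint (op_scal c A) (op_scal (Cconj c) B).
Proof.
  intros GA GB H a b Ha Hb. simpl.
  rewrite inner_scal_l, inner_scal_r, H; auto; [apply GB | apply GA]; auto.
Qed.

Lemma op_adjoint_sym A B : l2_total A -> l2_total B -> op_adjoint A B -> op_adjoint B A.
Proof.
  intros GA GB H a b Ha Hb.
  rewrite (inner_conj b (app B a)), <- H, (inner_conj a (app A b)) by auto.
  apply Cconj_conj.
Qed.

Lemma app_Lsh_pow m x n : app (op_pow Lsh m) x n = x (n + m)%nat.
Proof.
  revert n; induction m; intros n; simpl; [f_equal; lia|].
  rewrite IHm. f_equal; lia.
Qed.

Lemma app_Rsh_pow m x n :
  app (op_pow Rsh m) x n = if (m <=? n)%nat then x (n - m)%nat else RtoC 0.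
Proof.
  revert n; induction m; intros n; simpl; [f_equal; lia|].
  destruct n; [reflexivity|]. rewrite IHm. reflexivity.
Qed.

Lemma app_scal_Lsh_pow m c k x n :
  app (op_pow (op_scal c (op_pow Lsh m)) k) x n = (c ^ k * x (n + m * k)%nat)%C.
Proof.
  revert n; induction k; intros n; simpl.
  - rewrite Nat.mul_0_r, Nat.add_0_r. ring.
  - unfold vscal. rewrite app_Lsh_pow, IHk.
    replace (n + m + m * k)%nat with (n + m * S k)%nat by lia. ring.
Qed.

Lemma app_scal_Rsh_pow m c k x n :
  app (op_pow (op_scal c (op_pow Rsh m)) k) x n =
  (c ^ k * (if (m * k <=? n)%nat then x (n - m * k)%nat else RtoC 0))%C.
Proof.
  revert n; induction k; intros n; simpl.
  - rewrite Nat.mul_0_r; simpl. rewrite Nat.sub_0_r. ring.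
  - unfold vscal. rewrite app_Rsh_pow.
    destruct (Nat.leb_spec m n).
    + rewrite IHk.
      destruct (Nat.leb_spec (m * k) (n - m)), (Nat.leb_spec (m * S k) n); try lia; [|ring].
      replace (n - m - m * k)%nat with (n - m * S k)%nat by lia. ring.
    + destruct (Nat.leb_spec (m * S k) n); [lia|]. ring.
Qed.

Fixpoint sum1 (f : nat -> C) (K : nat) : C :=
  match K with O => RtoC 0 | S K => (sum1 f K + f (S K))%C end.

Fixpoint sum0 (f : nat -> C) (K : nat) : C :=
  match K with O => RtoC 0 | S K => (sum0 f K + f K)%C end.

Lemma sum1_ext f g K : (forall k, (1 <= k <= K)%nat -> f k = g k) -> sum1 f K = sum1 g K.
Proof.
  induction K; simpl; intros H; auto. rewrite (H (S K)), IHK by (intros; apply H || lia; lia).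
  reflexivity.
Qed.

Lemma sum1_scal c f K : sum1 (fun k => c * f k)%C K = (c * sum1 f K)%C.
Proof. induction K; simpl; [ring|]. rewrite IHK. ring. Qed.

Lemma Csub_as_sum1_lincomb a f g K :
  (a * sum1 f K - sum1 g K)%C = sum1 (fun k => a * f k - g k)%C K.
Proof. induction K; simpl; [ring|]. rewrite <- IHK. ring. Qed.

Lemma sum1_0 f K : (forall k, (1 <= k <= K)%nat -> f k = RtoC 0) -> sum1 f K = RtoC 0.
Proof.
  intros H. rewrite (sum1_ext f (fun _ => RtoC 0 * RtoC 0)%C) by (intros; rewrite H; auto; ring).
  rewrite sum1_scal. ring.
Qed.

Lemma sum1_shift f K : sum1 f (S K) = (f 1%nat + sum1 (fun k => f (S k)) K)%C.
Proof. induction K; simpl in *; [ring|]. rewrite IHK. ring. Qed.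

Lemma sum0_ext f g K : (forall k, (k < K)%nat -> f k = g k) -> sum0 f K = sum0 g K.
Proof. induction K; simpl; intros H; auto. rewrite IHK, H; auto. Qed.

Lemma sum0_plus f g K : sum0 (fun k => f k + g k)%C K = (sum0 f K + sum0 g K)%C.
Proof. induction K; simpl; [ring|]. rewrite IHK; ring. Qed.

Lemma sum0_scal c f K : sum0 (fun k => c * f k)%C K = (c * sum0 f K)%C.
Proof. induction K; simpl; [ring|]. rewrite IHK; ring. Qed.

Lemma sum0_const c K : sum0 (fun _ => c) K = (INR K * c)%C.
Proof. induction K; simpl sum0; [Cring|]. rewrite IHK, S_INR. Cring. Qed.

Fixpoint rsum0 (g : nat -> R) (K : nat) : R :=
  match K with O => 0 | S K => rsum0 g K + g K end.

Lemma Cmod_sum0_le f K : Cmod (sum0 f K) <= rsum0 (fun k => Cmod (f k)) K.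
Proof.
  induction K; simpl; [rewrite Cmod_0; lra|].
  eapply Rle_trans; [apply Cmod_triangle | lra].
Qed.

Lemma rsum0_le f g K : (forall k, f k <= g k) -> rsum0 f K <= rsum0 g K.
Proof. intros H; induction K; simpl; [lra|]. pose proof (H K); lra. Qed.

Lemma rsum0_nonneg f K : (forall k, 0 <= f k) -> 0 <= rsum0 f K.
Proof. intros H; induction K; simpl; [lra|]. pose proof (H K); lra. Qed.

Lemma rsum0_scal c f K : rsum0 (fun k => c * f k) K = c * rsum0 f K.
Proof. induction K; simpl; [ring|]. rewrite IHK; ring. Qed.

(** * The logarithmic series *)

Section LogSeries.
Variables (w' : C) (A : op).
Hypotheses (GA : l2_total A) (LA : op_linear A).

Lemma log_psum_coord x K n :
  log_psum w' A x K n =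
  sum1 (fun k => RtoC (/ INR k) * app (op_pow (op_scal (Cinv w') A) k) x n)%C K.
Proof. induction K; simpl; [reflexivity|]. unfold vadd, vscal. rewrite IHK. reflexivity. Qed.

Lemma in_l2_log_psum x K : in_l2 x -> in_l2 (log_psum w' A x K).
Proof.
  intros Hx. induction K; [apply in_l2_zero|].
  apply in_l2_add, in_l2_scal; auto.
  apply (l2_total_pow _ (S K) (l2_total_scal _ _ GA)); auto.
Qed.

Let lin_step k := op_linear_pow _ k (op_linear_scal (Cinv w') A LA).

Lemma log_psum_add x y K :
  log_psum w' A (vadd x y) K = vadd (log_psum w' A x K) (log_psum w' A y K).
Proof.
  induction K.
  - apply functional_extensionality; intros n. cbn [log_psum]; unfold vzero, vadd; ring.
  - cbn [log_psum]. rewrite IHK, (proj1 (lin_step (S K))).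
    apply functional_extensionality; intros n. unfold vadd, vscal. ring.
Qed.

Lemma log_psum_scal c x K : log_psum w' A (vscal c x) K = vscal c (log_psum w' A x K).
Proof.
  induction K.
  - apply functional_extensionality; intros n. cbn [log_psum]; unfold vzero, vscal; ring.
  - cbn [log_psum]. rewrite IHK, (proj2 (lin_step (S K))).
    apply functional_extensionality; intros n. unfold vadd, vscal. ring.
Qed.

Lemma dom_Log lg x : dom (Log lg w' A) x <-> in_l2 x /\ l2_conv (log_psum w' A x).
Proof.
  simpl. split; intros [H1 H2]; split; auto.
  - apply (proj1 (proj1 (l2_total_pow A 0 GA) x)), H1.
  - intros k. apply (proj1 (l2_total_pow A k GA)); auto.
Qed.

Lemma dom_Log_conv_to lg x y :
  in_l2 x -> conv_to (log_psum w' A x) y -> dom (Log lg w' A) x.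
Proof. intros Hx Hc. apply dom_Log. split; auto. exists y; auto. Qed.

Lemma Log_conv_to lg x : dom (Log lg w' A) x ->
  conv_to (log_psum w' A x) (vlim (log_psum w' A x)).
Proof.
  intros Hx. apply dom_Log in Hx. destruct Hx as [Hx [y Cy]].
  rewrite (conv_to_vlim _ y); auto. intros; apply in_l2_log_psum; auto.
Qed.

Lemma in_l2_dom_Log lg x : dom (Log lg w' A) x -> in_l2 x.
Proof. intros Hx. apply dom_Log in Hx. apply Hx. Qed.

Lemma vlim_log_psum_pointwise lg x : dom (Log lg w' A) x ->
  forall n, Clim (fun K => log_psum w' A x K n) (vlim (log_psum w' A x) n).
Proof.
  intros Hx. apply conv_to_pointwise; [|apply (Log_conv_to lg); auto].
  intros; apply in_l2_log_psum, (in_l2_dom_Log lg); auto.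
Qed.

Lemma in_l2_vlim_log_psum lg x : dom (Log lg w' A) x -> in_l2 (vlim (log_psum w' A x)).
Proof. intros Hx. apply (Log_conv_to lg x Hx). Qed.

Lemma Log_add lg x y : dom (Log lg w' A) x -> dom (Log lg w' A) y ->
  dom (Log lg w' A) (vadd x y) /\
  app (Log lg w' A) (vadd x y) = vadd (app (Log lg w' A) x) (app (Log lg w' A) y).
Proof.
  intros Hx Hy. pose proof (in_l2_dom_Log lg x Hx). pose proof (in_l2_dom_Log lg y Hy).
  assert (C : conv_to (log_psum w' A (vadd x y))
                (vadd (vlim (log_psum w' A x)) (vlim (log_psum w' A y)))).
  { replace (log_psum w' A (vadd x y))
      with (fun K => vadd (log_psum w' A x K) (log_psum w' A y K))
      by (apply functional_extensionality; intros; rewrite log_psum_add; auto).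
    apply conv_to_add; try apply (Log_conv_to lg); auto; intros; apply in_l2_log_psum; auto. }
  assert (Hxy : in_l2 (vadd x y)) by (apply in_l2_add; auto).
  split; [apply (dom_Log_conv_to lg _ _ Hxy C)|].
  simpl. rewrite (conv_to_vlim (log_psum w' A (vadd x y)) _ (fun K => in_l2_log_psum _ K Hxy) C).
  apply functional_extensionality; intros; unfold vsub, vadd, vscal; ring.
Qed.

Lemma Log_scal lg c x : dom (Log lg w' A) x ->
  dom (Log lg w' A) (vscal c x) /\
  app (Log lg w' A) (vscal c x) = vscal c (app (Log lg w' A) x).
Proof.
  intros Hx. pose proof (in_l2_dom_Log lg x Hx).
  assert (C : conv_to (log_psum w' A (vscal c x)) (vscal c (vlim (log_psum w' A x)))).
  { replace (log_psum w' A (vscal c x)) with (fun K => vscal c (log_psum w' A x K))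
      by (apply functional_extensionality; intros; rewrite log_psum_scal; auto).
    apply conv_to_scal; try apply (Log_conv_to lg); auto; intros; apply in_l2_log_psum; auto. }
  split; [apply (dom_Log_conv_to lg _ _ (in_l2_scal _ _ H) C)|].
  simpl. rewrite (conv_to_vlim (log_psum w' A (vscal c x)) _
    (fun K => in_l2_log_psum _ K (in_l2_scal _ _ H)) C).
  apply functional_extensionality; intros; unfold vsub, vadd, vscal; ring.
Qed.

Lemma in_l2_app_Log lg x : dom (Log lg w' A) x -> in_l2 (app (Log lg w' A) x).
Proof.
  intros Hx. apply in_l2_sub; [apply in_l2_scal, (in_l2_dom_Log lg)|
    apply (in_l2_vlim_log_psum lg)]; auto.
Qed.

End LogSeries.

Lemma inner_log_psum w1 w2 A B : l2_total A -> l2_total B ->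
  op_adjoint (op_scal (Cinv w1) A) (op_scal (Cinv w2) B) ->
  forall a b K, in_l2 a -> in_l2 b ->
  inner (log_psum w1 A a K) b = inner a (log_psum w2 B b K).
Proof.
  intros GA GB H a b K Ha Hb. induction K.
  - change (inner vzero b = inner a vzero). rewrite inner_zero_l, inner_zero_r; auto.
  - assert (G1 := l2_total_pow _ (S K) (l2_total_scal (Cinv w1) A GA)).
    assert (G2 := l2_total_pow _ (S K) (l2_total_scal (Cinv w2) B GB)).
    assert (Q1 : in_l2 (app (op_pow (op_scal (Cinv w1) A) (S K)) a)) by (apply G1; auto).
    assert (Q2 : in_l2 (app (op_pow (op_scal (Cinv w2) B) (S K)) b)) by (apply G2; auto).
    cbn [log_psum].
    rewrite inner_add_l, inner_add_r, inner_scal_l, inner_scal_r, IHK, Cconj_RtoC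
      by (auto using in_l2_scal, in_l2_log_psum).
    rewrite (op_adjoint_pow _ _ (S K) (l2_total_scal _ _ GA) (l2_total_scal _ _ GB) H a b Ha Hb).
    reflexivity.
Qed.

Lemma inner_vlim_log_psum lg1 lg2 w1 w2 A B x y : l2_total A -> l2_total B ->
  op_adjoint (op_scal (Cinv w1) A) (op_scal (Cinv w2) B) ->
  dom (Log lg1 w1 A) x -> dom (Log lg2 w2 B) y ->
  inner (vlim (log_psum w1 A x)) y = inner x (vlim (log_psum w2 B y)).
Proof.
  intros GA GB H Hx Hy.
  pose proof (in_l2_dom_Log _ _ GA _ _ Hx). pose proof (in_l2_dom_Log _ _ GB _ _ Hy).
  assert (L1 := Clim_inner_l _ _ y (fun K => in_l2_log_psum w1 A GA x K H0)
                  (Log_conv_to _ _ GA _ _ Hx) H1).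
  assert (L2 := Clim_inner_r _ _ x (fun K => in_l2_log_psum w2 B GB y K H1)
                  (Log_conv_to _ _ GB _ _ Hy) H0).
  apply (Clim_unique _ _ _ L1). eapply Clim_ext; [|exact L2].
  intros K. symmetry. apply inner_log_psum; auto.
Qed.

Definition ccr_dom (lg : C -> C) (m : nat) (w : C) (x : vec) : Prop :=
  dom (op_comp Nop (Lmw lg m w)) x /\ dom (op_comp (Lmw lg m w) Nop) x.

Lemma Nop_add x y : dom Nop x -> dom Nop y ->
  dom Nop (vadd x y) /\ app Nop (vadd x y) = vadd (app Nop x) (app Nop y).
Proof.
  intros [H1 H2] [H3 H4]. simpl in *. split; [split|].
  - apply in_l2_add; auto.
  - eapply in_l2_ext; [|apply (in_l2_add _ _ H2 H4)]. intros; unfold vadd; simpl; ring.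
  - apply functional_extensionality; intros; unfold vadd; ring.
Qed.

Lemma Nop_scal c x : dom Nop x ->
  dom Nop (vscal c x) /\ app Nop (vscal c x) = vscal c (app Nop x).
Proof.
  intros [H1 H2]. simpl in *. split; [split|].
  - apply in_l2_scal; auto.
  - eapply in_l2_ext; [|apply (in_l2_scal c _ H2)]. intros; unfold vscal; simpl; ring.
  - apply functional_extensionality; intros; unfold vscal; ring.
Qed.

Section Lmw.
Variables (lg : C -> C) (m : nat) (w : C).

Let GL := l2_total_pow Lsh m l2_total_Lsh.
Let GR := l2_total_pow Rsh m l2_total_Rsh.
Let LL := op_linear_pow Lsh m op_linear_Lsh.
Let LR := op_linear_pow Rsh m op_linear_Rsh.

Lemma Lmw_add x y : dom (Lmw lg m w) x -> dom (Lmw lg m w) y ->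
  dom (Lmw lg m w) (vadd x y) /\
  app (Lmw lg m w) (vadd x y) = vadd (app (Lmw lg m w) x) (app (Lmw lg m w) y).
Proof.
  intros [Lx Rx] [Ly Ry].
  destruct (Log_add _ _ GL LL lg x y Lx Ly) as [L1 L2].
  destruct (Log_add _ _ GR LR lg x y Rx Ry) as [R1 R2].
  split; [split; auto|]. simpl in *. rewrite L2, R2.
  apply functional_extensionality; intros; unfold vsub, vadd, vscal; ring.
Qed.

Lemma Lmw_scal c x : dom (Lmw lg m w) x ->
  dom (Lmw lg m w) (vscal c x) /\ app (Lmw lg m w) (vscal c x) = vscal c (app (Lmw lg m w) x).
Proof.
  intros [Lx Rx].
  destruct (Log_scal _ _ GL LL lg c x Lx) as [L1 L2].
  destruct (Log_scal _ _ GR LR lg c x Rx) as [R1 R2].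
  split; [split; auto|]. simpl in *. rewrite L2, R2.
  apply functional_extensionality; intros; unfold vsub, vadd, vscal; ring.
Qed.

Lemma in_l2_app_Lmw x : dom (Lmw lg m w) x -> in_l2 (app (Lmw lg m w) x).
Proof.
  intros [Lx Rx]. apply in_l2_scal, in_l2_sub.
  - apply (in_l2_app_Log _ _ GL _ _ Lx).
  - apply (in_l2_app_Log _ _ GR _ _ Rx).
Qed.

Lemma ccr_dom_add x y : ccr_dom lg m w x -> ccr_dom lg m w y -> ccr_dom lg m w (vadd x y).
Proof.
  intros [[Tx NTx] [Nx TNx]] [[Ty NTy] [Ny TNy]].
  destruct (Lmw_add x y Tx Ty) as [T1 T2], (Nop_add x y Nx Ny) as [N1 N2].
  split; split; auto.
  - change (dom Nop (app (Lmw lg m w) (vadd x y))). rewrite T2. apply Nop_add; auto.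
  - change (dom (Lmw lg m w) (app Nop (vadd x y))). rewrite N2. apply Lmw_add; auto.
Qed.

Lemma ccr_dom_scal c x : ccr_dom lg m w x -> ccr_dom lg m w (vscal c x).
Proof.
  intros [[Tx NTx] [Nx TNx]].
  destruct (Lmw_scal c x Tx) as [T1 T2], (Nop_scal c x Nx) as [N1 N2].
  split; split; auto.
  - change (dom Nop (app (Lmw lg m w) (vscal c x))). rewrite T2. apply Nop_scal; auto.
  - change (dom (Lmw lg m w) (app Nop (vscal c x))). rewrite N2. apply Lmw_scal; auto.
Qed.

Hypotheses (Hl : is_log lg) (Hw : Cmod w = 1) (Hm : (1 <= m)%nat).

Lemma op_adjoint_log_steps :
  op_adjoint (op_scal (Cinv w) (op_pow Lsh m)) (op_scal (Cinv (Cconj w)) (op_pow Rsh m)).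
Proof.
  rewrite unit_Cmod_Cinv_conj, unit_Cmod_Cinv by auto.
  rewrite <- (Cconj_conj w) at 2. apply op_adjoint_scal; auto.
  apply op_adjoint_pow; auto using l2_total_Lsh, l2_total_Rsh, op_adjoint_Lsh_Rsh.
Qed.

(* Up to the scalar [i/m], [L_{m,w} x = c x - V_L x + V_R x] where [c] is the purely
   imaginary number [log w - log (conj w)], and [V_L], [V_R] are adjoint to each other. *)
Lemma Lmw_symmetric x y : dom (Lmw lg m w) x -> dom (Lmw lg m w) y ->
  inner (app (Lmw lg m w) x) y = inner x (app (Lmw lg m w) y).
Proof.
  intros [X1 X2] [Y1 Y2].
  assert (AD := op_adjoint_log_steps).
  assert (AD' := op_adjoint_sym _ _ (l2_total_scal _ _ GL) (l2_total_scal _ _ GR) AD).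
  pose proof (in_l2_dom_Log _ _ GL _ _ X1) as Hx. pose proof (in_l2_dom_Log _ _ GL _ _ Y1) as Hy.
  set (V1 := fun v => vlim (log_psum w (op_pow Lsh m) v)).
  set (V2 := fun v => vlim (log_psum (Cconj w) (op_pow Rsh m) v)).
  set (g := (Ci / INR m)%C). set (d := (lg w - lg (Cconj w))%C).
  assert (ET : forall v, app (Lmw lg m w) v =
    vadd (vscal (g * d) v) (vadd (vscal (- g) (V1 v)) (vscal g (V2 v)))).
  { intros v. apply functional_extensionality; intros n. simpl.
    unfold vadd, vsub, vscal, V1, V2, g, d. ring. }
  assert (A1 : inner (V1 x) y = inner x (V2 y)) by (apply (inner_vlim_log_psum lg lg); auto).
  assert (A2 : inner (V2 x) y = inner x (V1 y)) by (apply (inner_vlim_log_psum lg lg); auto).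
  pose proof (in_l2_vlim_log_psum _ _ GL _ _ X1). pose proof (in_l2_vlim_log_psum _ _ GR _ _ X2).
  pose proof (in_l2_vlim_log_psum _ _ GL _ _ Y1). pose proof (in_l2_vlim_log_psum _ _ GR _ _ Y2).
  rewrite !ET, !inner_add_l, !inner_add_r, !inner_scal_l, !inner_scal_r, A1, A2
    by (auto using in_l2_scal, in_l2_add).
  assert (R1 := is_log_Re_unit lg w Hl Hw).
  assert (R2 := is_log_Re_unit lg (Cconj w) Hl ltac:(rewrite Cmod_conj; auto)).
  assert (INR m <> 0) by (apply not_0_INR; lia).
  unfold g, d. generalize (inner x y) (inner x (V2 y)) (inner x (V1 y)). intros p q r.
  destruct (lg w) as [l1 l1'], (lg (Cconj w)) as [l2 l2']. unfold Re in R1, R2.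
  simpl in R1, R2. subst l1 l2. Cfield; auto.
Qed.

End Lmw.

(** * The commutator [[N, L_{m,w}]] *)

Lemma Clim_recurrence (u v : nat -> C) a b l l' :
  Clim u l -> Clim v l' -> (forall K, u (S K) = a + b * v K)%C -> l = (a + b * l')%C.
Proof.
  intros Hu Hv Huv. apply (Clim_unique (fun K => u (S K))); [apply Clim_S; auto|].
  eapply Clim_ext; [intros K; symmetry; apply Huv|].
  apply Clim_plus; [apply Clim_const| apply Clim_scal; auto].
Qed.

(* The square-summable terms would have constant modulus along [n, n + m, n + 2m, ...]. *)
Lemma l2_quasiperiodic_0 (F : vec) (w : C) m : in_l2 F -> Cmod w = 1 -> (1 <= m)%nat ->
  (forall n, F (n + m)%nat = w * F n)%C -> forall n, F n = RtoC 0.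
Proof.
  intros HF Hw Hm Hrec n.
  assert (Hk : forall k, Cmod (F (n + m * k)%nat) ^ 2 = Cmod (F n) ^ 2).
  { induction k; [rewrite Nat.mul_0_r, Nat.add_0_r; auto|].
    replace (n + m * S k)%nat with ((n + m * k) + m)%nat by lia.
    rewrite Hrec, Cmod_mult, Hw, Rmult_1_l; auto. }
  assert (L := ex_series_lim_0 _ HF).
  apply (is_lim_seq_subseq _ _ (fun k => n + m * k)%nat) in L;
    [|apply eventually_subseq; intros; lia].
  apply is_lim_seq_ext with (v := fun _ => Cmod (F n) ^ 2) in L; auto.
  apply is_lim_seq_unique in L. rewrite Lim_seq_const in L. injection L; intros E.
  apply Cmod_eq_0. nra.
Qed.

Section Commutator.
Variables (m : nat) (c : C) (x : vec).

(* What remains of the two logarithmic series after commuting with [N]. *)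
Definition fwd_sum (K n : nat) : C := sum1 (fun k => c ^ k * x (n + m * k)%nat)%C K.
Definition bwd_sum (K n : nat) : C :=
  sum1 (fun k => c ^ k * (if (m * k <=? n)%nat then x (n - m * k)%nat else RtoC 0))%C K.

Lemma fwd_sum_S K n : fwd_sum (S K) n = (c * x (n + m)%nat + c * fwd_sum K (n + m))%C.
Proof.
  unfold fwd_sum. rewrite sum1_shift, <- sum1_scal. f_equal.
  - simpl. rewrite Nat.mul_1_r. ring.
  - apply sum1_ext. intros k _. simpl. replace (n + m * S k)%nat with (n + m + m * k)%nat by lia.
    ring.
Qed.

Lemma bwd_sum_S K n : bwd_sum (S K) (n + m) = (c * x n + c * bwd_sum K n)%C.
Proof.
  unfold bwd_sum. rewrite sum1_shift, <- sum1_scal. f_equal.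
  - simpl. rewrite Nat.mul_1_r. destruct (Nat.leb_spec m (n + m)); [|lia].
    replace (n + m - m)%nat with n by lia. ring.
  - apply sum1_ext. intros k _. simpl Cpow.
    destruct (Nat.leb_spec (m * S k) (n + m)), (Nat.leb_spec (m * k) n); try lia; [|ring].
    replace (n + m - m * S k)%nat with (n - m * k)%nat by lia. ring.
Qed.

Hypothesis Hm : (1 <= m)%nat.

Lemma Nop_log_psum_Lsh w' K n : Cinv w' = c ->
  (INR n * log_psum w' (op_pow Lsh m) x K n - log_psum w' (op_pow Lsh m) (app Nop x) K n)%C =
  (- INR m * fwd_sum K n)%C.
Proof.
  intros Hc. rewrite !log_psum_coord. unfold fwd_sum.
  rewrite Csub_as_sum1_lincomb, <- sum1_scal. apply sum1_ext. intros k Hk.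
  rewrite !app_scal_Lsh_pow, Hc. simpl app. rewrite plus_INR, mult_INR.
  assert (INR k <> 0) by (apply not_0_INR; lia).
  generalize (c ^ k)%C (x (n + m * k)%nat). intros a b. Cfield; auto.
Qed.

Lemma Nop_log_psum_Rsh w' K n : Cinv w' = c ->
  (INR n * log_psum w' (op_pow Rsh m) x K n - log_psum w' (op_pow Rsh m) (app Nop x) K n)%C =
  (INR m * bwd_sum K n)%C.
Proof.
  intros Hc. rewrite !log_psum_coord. unfold bwd_sum.
  rewrite Csub_as_sum1_lincomb, <- sum1_scal. apply sum1_ext. intros k Hk.
  rewrite !app_scal_Rsh_pow, Hc. simpl app.
  assert (INR k <> 0) by (apply not_0_INR; lia).
  destruct (Nat.leb_spec (m * k) n); [|Cring].
  rewrite minus_INR, mult_INR by auto.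
  generalize (c ^ k)%C (x (n - m * k)%nat). intros a b. Cfield; auto.
Qed.

End Commutator.

Section CCR.
Variables (lg : C -> C) (m : nat) (w : C).
Hypotheses (Hw : Cmod w = 1) (Hm : (1 <= m)%nat).

Let GL := l2_total_pow Lsh m l2_total_Lsh.
Let GR := l2_total_pow Rsh m l2_total_Rsh.

Lemma Clim_fwd_sum x : dom (Log lg w (op_pow Lsh m)) x ->
  dom (Log lg w (op_pow Lsh m)) (app Nop x) -> forall n,
  Clim (fun K => fwd_sum m (Cinv w) x K n)
    (- / INR m * (INR n * vlim (log_psum w (op_pow Lsh m) x) n
                  - vlim (log_psum w (op_pow Lsh m) (app Nop x)) n))%C.
Proof.
  intros Hx HNx n. assert (INR m <> 0) by (apply not_0_INR; lia).
  apply Clim_ext with (fun K => - / INR m * (INR n * log_psum w (op_pow Lsh m) x K n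
                  - log_psum w (op_pow Lsh m) (app Nop x) K n))%C.
  { intros K. rewrite (Nop_log_psum_Lsh m (Cinv w) x Hm w K n eq_refl). field.
    intros E. apply H. injection E. auto. }
  apply Clim_scal, Clim_minus; [apply Clim_scal|];
    apply (vlim_log_psum_pointwise _ _ GL lg); auto.
Qed.

Lemma Clim_bwd_sum x : dom (Log lg (Cconj w) (op_pow Rsh m)) x ->
  dom (Log lg (Cconj w) (op_pow Rsh m)) (app Nop x) -> forall n,
  Clim (fun K => bwd_sum m (Cinv (Cconj w)) x K n)
    (/ INR m * (INR n * vlim (log_psum (Cconj w) (op_pow Rsh m) x) n
                - vlim (log_psum (Cconj w) (op_pow Rsh m) (app Nop x)) n))%C.
Proof.
  intros Hx HNx n. assert (INR m <> 0) by (apply not_0_INR; lia).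
  apply Clim_ext with (fun K => / INR m * (INR n * log_psum (Cconj w) (op_pow Rsh m) x K n
                - log_psum (Cconj w) (op_pow Rsh m) (app Nop x) K n))%C.
  { intros K. rewrite (Nop_log_psum_Rsh m (Cinv (Cconj w)) x Hm (Cconj w) K n eq_refl). field.
    intros E. apply H. injection E. auto. }
  apply Clim_scal, Clim_minus; [apply Clim_scal|];
    apply (vlim_log_psum_pointwise _ _ GR lg); auto.
Qed.

(* With [G], [H] the limits of [fwd_sum] and [bwd_sum], the commutator is [i (G + H)], while
   [F = x + G + H] satisfies [F (n + m) = w F n]; being square summable, [F] vanishes. *)
Lemma Lmw_commutator x : ccr_dom lg m w x ->
  vsub (app Nop (app (Lmw lg m w) x)) (app (Lmw lg m w) (app Nop x)) = vscal (- Ci) x.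
Proof.
  intros [[[L1 R1] NTx] [Nx [L2 R2]]].
  set (G := fun n => (- / INR m * (INR n * vlim (log_psum w (op_pow Lsh m) x) n
                  - vlim (log_psum w (op_pow Lsh m) (app Nop x)) n))%C).
  set (H := fun n => (/ INR m * (INR n * vlim (log_psum (Cconj w) (op_pow Rsh m) x) n
                - vlim (log_psum (Cconj w) (op_pow Rsh m) (app Nop x)) n))%C).
  assert (RG : forall n, G n = (Cinv w * x (n + m)%nat + Cinv w * G (n + m)%nat)%C).
  { intros n. apply (Clim_recurrence _ _ _ _ _ _ (Clim_fwd_sum x L1 L2 n)
      (Clim_fwd_sum x L1 L2 (n + m))). intros K. apply fwd_sum_S. }
  assert (RH : forall n,
    H (n + m)%nat = (Cinv (Cconj w) * x n + Cinv (Cconj w) * H n)%C).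
  { intros n. apply (Clim_recurrence _ _ _ _ _ _ (Clim_bwd_sum x R1 R2 (n + m))
      (Clim_bwd_sum x R1 R2 n)). intros K. apply bwd_sum_S. }
  set (comm := vsub (app Nop (app (Lmw lg m w) x)) (app (Lmw lg m w) (app Nop x))).
  assert (Ecomm : forall n, comm n = (Ci * (G n + H n))%C).
  { intros n. unfold comm, G, H. simpl. unfold vsub, vscal.
    assert (INR m <> 0) by (apply not_0_INR; lia).
    generalize (vlim (log_psum w (op_pow Lsh m) x) n)
      (vlim (log_psum w (op_pow Lsh m) (fun k => (INR k * x k)%C)) n)
      (vlim (log_psum (Cconj w) (op_pow Rsh m) x) n)
      (vlim (log_psum (Cconj w) (op_pow Rsh m) (fun k => (INR k * x k)%C)) n).
    intros a b c d. generalize (lg w) (lg (Cconj w)) (x n). intros e f g. Cfield; auto. }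
  set (F := fun n => (x n + (G n + H n))%C).
  assert (HF : in_l2 F).
  { apply in_l2_ext with (vadd x (vscal (- Ci) comm)).
    - intros n. unfold vadd, vscal, F. rewrite Ecomm. generalize (x n) (G n) (H n).
      intros. Cring.
    - apply in_l2_add, in_l2_scal; [apply Nx|]. apply in_l2_sub; [apply NTx|].
      apply in_l2_app_Lmw. split; auto. }
  assert (F0 : forall n, F n = RtoC 0).
  { apply (l2_quasiperiodic_0 F w m HF Hw Hm). intros n. unfold F.
    rewrite (RG n), (RH n), unit_Cmod_Cinv_conj by auto.
    generalize (x n) (x (n + m)%nat) (G (n + m)%nat) (H n). intros.
    field. apply unit_Cmod_neq0; auto. }
  apply functional_extensionality; intros n. fold comm. rewrite Ecomm. unfold vscal.
  specialize (F0 n). unfold F in F0.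
  replace (G n + H n)%C with (RtoC 0 - x n)%C by (rewrite <- F0; ring). Cring.
Qed.

End CCR.

(** * A dense subspace of the CCR domain *)

Definition xi (j : nat) : vec := fun n => if (n =? j)%nat then RtoC 1 else RtoC 0.

Lemma xi_finsupp j n : (S j <= n)%nat -> xi j n = RtoC 0.
Proof. intros Hn. unfold xi. destruct (Nat.eqb_spec n j); auto. lia. Qed.

Lemma in_l2_xi j : in_l2 (xi j).
Proof. apply (in_l2_finsupp _ (S j)). apply xi_finsupp. Qed.

Lemma Nop_xi j n : (INR n * xi j n)%C = (INR j * xi j n)%C.
Proof. unfold xi. destruct (Nat.eqb_spec n j); [subst; auto|ring]. Qed.

Section Progression.
Variables (m : nat).
Hypothesis Hm : (1 <= m)%nat.

Definition ap_index (j n : nat) : option nat :=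
  if andb (j <=? n)%nat ((n - j) mod m =? 0)%nat then Some ((n - j) / m)%nat else None.

Lemma ap_index_Some j n p : ap_index j n = Some p <-> n = (j + m * p)%nat.
Proof.
  unfold ap_index. split.
  - destruct (Nat.leb_spec j n), (Nat.eqb_spec ((n - j) mod m) 0); simpl; intros E;
      try discriminate.
    injection E; intros <-. pose proof (Nat.div_mod (n - j) m ltac:(lia)). lia.
  - intros ->. replace (j + m * p - j)%nat with (p * m)%nat by lia.
    rewrite Nat.Div0.mod_mul, Nat.div_mul by lia.
    destruct (Nat.leb_spec j (j + m * p)); [reflexivity|lia].
Qed.

Lemma ap_index_None j n : ap_index j n = None -> forall p, n <> (j + m * p)%nat.
Proof. intros H p E. apply ap_index_Some in E. congruence. Qed.

Lemma ap_index_shift j n :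
  ap_index (j + m) n = match ap_index j n with Some (S p) => Some p | _ => None end.
Proof.
  destruct (ap_index j n) as [[|p]|] eqn:E.
  - apply ap_index_Some in E. destruct (ap_index (j + m) n) eqn:E2; auto.
    apply ap_index_Some in E2. lia.
  - apply ap_index_Some in E. apply ap_index_Some. lia.
  - destruct (ap_index (j + m) n) eqn:E2; auto. apply ap_index_Some in E2.
    exfalso. apply (ap_index_None j n E (S n0)). lia.
Qed.

End Progression.

(* a summable majorant of [|1/q|^2] along the progression [n = j + m q] *)
Definition ap_majorant (m j n : nat) : R := INR (j + m + 1) ^ 2 * / (INR n + 1) ^ 2.

Lemma ap_majorant_nonneg m j n : 0 <= ap_majorant m j n.
Proof.
  unfold ap_majorant. apply Rmult_le_pos; [apply pow2_ge_0|].
  apply Rlt_le, Rinv_0_lt_compat, pow_lt. pose proof (pos_INR n); lra.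
Qed.

Lemma ex_series_ap_majorant m j : ex_series (ap_majorant m j).
Proof. apply ex_series_scal_R, ex_series_inv_succ_sq. Qed.

Lemma inv_index_sq_le_ap_majorant m j n q : n = (j + m * S q)%nat ->
  (/ INR (S q)) ^ 2 <= ap_majorant m j n.
Proof.
  intros E. assert (HS : 0 < INR (S q)) by (apply lt_0_INR; lia).
  assert (HJ : 0 < INR (j + m + 1)) by (apply lt_0_INR; lia).
  assert (Hn : INR n + 1 <= INR (j + m + 1) * INR (S q)).
  { rewrite <- S_INR, <- mult_INR. apply le_INR. nia. }
  assert (0 < INR n + 1) by (pose proof (pos_INR n); lra).
  unfold ap_majorant.
  apply Rmult_le_reg_r with ((INR n + 1) ^ 2 * INR (S q) ^ 2); [apply Rmult_lt_0_compat; apply pow_lt; lra|].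
  replace ((/ INR (S q)) ^ 2 * ((INR n + 1) ^ 2 * INR (S q) ^ 2)) with ((INR n + 1) ^ 2)
    by (field; lra).
  replace (INR (j + m + 1) ^ 2 * / (INR n + 1) ^ 2 * ((INR n + 1) ^ 2 * INR (S q) ^ 2))
    with ((INR (j + m + 1) * INR (S q)) ^ 2) by (field; lra).
  apply pow_incr. lra.
Qed.

Section Core.
Variables (lg : C -> C) (m : nat) (w : C).
Hypotheses (Hw : Cmod w = 1) (Hm : (1 <= m)%nat).

Let GL := l2_total_pow Lsh m l2_total_Lsh.
Let GR := l2_total_pow Rsh m l2_total_Rsh.

Lemma log_psum_Lsh_coord y K n : log_psum w (op_pow Lsh m) y K n =
  sum1 (fun k => RtoC (/ INR k) * (Cinv w ^ k * y (n + m * k)%nat))%C K.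
Proof. rewrite log_psum_coord. apply sum1_ext. intros. rewrite app_scal_Lsh_pow. reflexivity. Qed.

Lemma log_psum_Rsh_coord y K n : log_psum (Cconj w) (op_pow Rsh m) y K n =
  sum1 (fun k => RtoC (/ INR k) *
     (w ^ k * (if (m * k <=? n)%nat then y (n - m * k)%nat else RtoC 0)))%C K.
Proof.
  rewrite log_psum_coord, unit_Cmod_Cinv_conj by auto.
  apply sum1_ext. intros. rewrite app_scal_Rsh_pow. reflexivity.
Qed.

(* [sum_{q = 1}^K (1/q) w^q xi_(j + m q)], the partial sums of [log] applied to [xi j] *)
Definition logR_xi_upto (K j : nat) : vec := fun n =>
  match ap_index m j n with
  | Some (S q) => if (S q <=? K)%nat then (RtoC (/ INR (S q)) * w ^ S q)%C else RtoC 0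
  | _ => RtoC 0
  end.

Definition logR_xi (j : nat) : vec := fun n =>
  match ap_index m j n with
  | Some (S q) => (RtoC (/ INR (S q)) * w ^ S q)%C
  | _ => RtoC 0
  end.

Lemma log_psum_Rsh_xi j K : log_psum (Cconj w) (op_pow Rsh m) (xi j) K = logR_xi_upto K j.
Proof.
  apply functional_extensionality; intros n.
  rewrite log_psum_Rsh_coord. unfold logR_xi_upto. induction K.
  - simpl. destruct (ap_index m j n) as [[|q]|]; auto.
  - cbn [sum1]. rewrite IHK. unfold xi.
    destruct (ap_index m j n) as [[|q]|] eqn:E.
    + apply (ap_index_Some m Hm) in E.
      destruct (Nat.leb_spec (m * S K) n); [|ring].
      destruct (Nat.eqb_spec (n - m * S K) j); [lia|ring].
    + apply (ap_index_Some m Hm) in E.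
      destruct (Nat.leb_spec (m * S K) n), (Nat.leb_spec (S q) K), (Nat.leb_spec (S q) (S K));
        try destruct (Nat.eqb_spec (n - m * S K) j); try ring; try nia.
      assert (q = K) by nia. subst q. ring.
    + destruct (Nat.leb_spec (m * S K) n); [|ring].
      destruct (Nat.eqb_spec (n - m * S K) j); [|ring].
      exfalso. apply (ap_index_None m Hm j n E (S K)). lia.
Qed.

Lemma Cmod_log_coef_sq q : Cmod (RtoC (/ INR (S q)) * w ^ S q) ^ 2 = (/ INR (S q)) ^ 2.
Proof.
  rewrite Cmod_mult, Cmod_pow, Hw, pow1, Rmult_1_r, Cmod_R, Rabs_pos_eq; auto.
  apply Rlt_le, Rinv_0_lt_compat, lt_0_INR. lia.
Qed.

Lemma Cmod_logR_xi_sq_le j n : Cmod (logR_xi j n) ^ 2 <= ap_majorant m j n.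
Proof.
  unfold logR_xi. destruct (ap_index m j n) as [[|q]|] eqn:E;
    try (rewrite Cmod_0, pow_i by lia; apply ap_majorant_nonneg).
  rewrite Cmod_log_coef_sq. apply (inv_index_sq_le_ap_majorant m).
  apply (ap_index_Some m Hm) in E. exact E.
Qed.

Lemma in_l2_logR_xi j : in_l2 (logR_xi j).
Proof.
  apply ex_series_nonneg_le with (ap_majorant m j); [|apply ex_series_ap_majorant].
  intros n; split; [apply Cmod_sq_ge0| apply Cmod_logR_xi_sq_le].
Qed.

Lemma conv_to_log_psum_Rsh_xi j :
  conv_to (log_psum (Cconj w) (op_pow Rsh m) (xi j)) (logR_xi j).
Proof.
  apply conv_to_dominated with (ap_majorant m j).
  - intros; apply in_l2_log_psum, in_l2_xi; auto.
  - apply in_l2_logR_xi.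
  - apply ap_majorant_nonneg.
  - apply ex_series_ap_majorant.
  - intros K n. rewrite log_psum_Rsh_xi. eapply Rle_trans; [|apply (Cmod_logR_xi_sq_le j n)].
    unfold logR_xi_upto, logR_xi.
    destruct (ap_index m j n) as [[|q]|]; [| |right; f_equal; f_equal; ring].
    + right. f_equal. f_equal. ring.
    + destruct (Nat.leb_spec (S q) K).
      * replace (_ - _)%C with (RtoC 0) by ring. rewrite Cmod_0, pow_i by lia.
        apply pow2_ge_0.
      * right. rewrite <- Cmod_opp. f_equal. f_equal. ring.
  - intros K n Hn. rewrite log_psum_Rsh_xi. unfold logR_xi_upto, logR_xi.
    destruct (ap_index m j n) as [[|q]|] eqn:E; auto.
    apply (ap_index_Some m Hm) in E. destruct (Nat.leb_spec (S q) K); [auto|nia].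
Qed.

Definition pair_vec (a b : C) (j : nat) : vec := vadd (vscal a (xi j)) (vscal b (xi (j + m))).

Lemma pair_vec_finsupp a b j n : (S (j + m) <= n)%nat -> pair_vec a b j n = RtoC 0.
Proof. intros Hn. unfold pair_vec, vadd, vscal. rewrite !xi_finsupp by lia. ring. Qed.

Lemma in_l2_pair_vec a b j : in_l2 (pair_vec a b j).
Proof. apply (in_l2_finsupp _ (S (j + m))), pair_vec_finsupp. Qed.

Lemma Log_Rsh_pair_vec a b j :
  dom (Log lg (Cconj w) (op_pow Rsh m)) (pair_vec a b j) /\
  vlim (log_psum (Cconj w) (op_pow Rsh m) (pair_vec a b j))
  = vadd (vscal a (logR_xi j)) (vscal b (logR_xi (j + m))).
Proof.
  assert (LR := op_linear_pow Rsh m op_linear_Rsh).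
  assert (P : forall i K, in_l2 (log_psum (Cconj w) (op_pow Rsh m) (xi i) K))
    by (intros; apply in_l2_log_psum, in_l2_xi; auto).
  assert (C : conv_to (log_psum (Cconj w) (op_pow Rsh m) (pair_vec a b j))
                (vadd (vscal a (logR_xi j)) (vscal b (logR_xi (j + m))))).
  { replace (log_psum (Cconj w) (op_pow Rsh m) (pair_vec a b j))
      with (fun K => vadd (vscal a (log_psum (Cconj w) (op_pow Rsh m) (xi j) K))
                          (vscal b (log_psum (Cconj w) (op_pow Rsh m) (xi (j + m)) K))).
    - apply conv_to_add; try (intros; apply in_l2_scal; auto);
        apply conv_to_scal, conv_to_log_psum_Rsh_xi; auto.
    - apply functional_extensionality; intros K. unfold pair_vec.
      rewrite log_psum_add, !log_psum_scal; auto. }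
  split.
  - apply (dom_Log_conv_to _ _ GR lg _ _ (in_l2_pair_vec a b j) C).
  - apply conv_to_vlim; auto. intros; apply in_l2_log_psum, in_l2_pair_vec; auto.
Qed.

(* On vectors supported in [[0, P)], the series of [Log(w - L^m)] has at most [P] nonzero terms. *)
Lemma Log_Lsh_finsupp y P : (forall n, (P <= n)%nat -> y n = RtoC 0) ->
  dom (Log lg w (op_pow Lsh m)) y /\
  vlim (log_psum w (op_pow Lsh m) y) = log_psum w (op_pow Lsh m) y P /\
  (forall n, (P <= n)%nat -> log_psum w (op_pow Lsh m) y P n = RtoC 0).
Proof.
  intros Hy. assert (Hl2 : in_l2 y) by (apply (in_l2_finsupp y P); auto).
  assert (E : forall d, log_psum w (op_pow Lsh m) y (P + d) = log_psum w (op_pow Lsh m) y P).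
  { intros d. apply functional_extensionality; intros n. rewrite !log_psum_Lsh_coord.
    induction d; [rewrite Nat.add_0_r; auto|].
    rewrite Nat.add_succ_r. cbn [sum1]. rewrite IHd, Hy by nia. ring. }
  assert (C : conv_to (log_psum w (op_pow Lsh m) y) (log_psum w (op_pow Lsh m) y P)).
  { apply conv_to_eventually_const with P; [apply in_l2_log_psum; auto|].
    intros K HK. replace K with (P + (K - P))%nat by lia. apply E. }
  split; [|split].
  - apply (dom_Log_conv_to _ _ GL lg _ _ Hl2 C).
  - apply conv_to_vlim; auto. intros; apply in_l2_log_psum; auto.
  - intros n Hn. rewrite log_psum_Lsh_coord. apply sum1_0. intros k Hk.
    rewrite Hy by nia. ring.
Qed.

Lemma inv_consecutive_prod_sq_le (a J Q : R) : 0 <= a -> 0 <= Q -> a <= J * (Q + 2) ->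
  (a * / ((Q + 1) * (Q + 2))) ^ 2 <= 4 * J ^ 2 * (/ (Q + 2)) ^ 2.
Proof.
  intros Ha HQ Hb.
  assert (H1 : a * / ((Q + 1) * (Q + 2)) <= 2 * J * / (Q + 2)).
  { apply Rmult_le_reg_r with ((Q + 1) * (Q + 2)); [nra|].
    replace (a * / ((Q + 1) * (Q + 2)) * ((Q + 1) * (Q + 2))) with a by (field; lra).
    replace (2 * J * / (Q + 2) * ((Q + 1) * (Q + 2))) with (2 * J * (Q + 1)) by (field; lra).
    nra. }
  assert (0 <= a * / ((Q + 1) * (Q + 2)))
    by (apply Rmult_le_pos; [lra|apply Rlt_le, Rinv_0_lt_compat; nra]).
  replace (4 * J ^ 2 * (/ (Q + 2)) ^ 2) with ((2 * J * / (Q + 2)) ^ 2) by ring.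
  apply pow_incr. lra.
Qed.

(* Consecutive coefficients [w^q / q] of [logR_xi j] and [w . logR_xi (j + m)] cancel up to
   [O(1/q^2)], which makes [N] applicable to their difference. *)
Lemma Cmod_Nop_logR_xi_diff_sq_le j n :
  Cmod (INR n * (logR_xi j n - w * logR_xi (j + m) n)) ^ 2 <= 4 * INR (j + m) ^ 2 * ap_majorant m j n.
Proof.
  assert (R0 : 0 <= 4 * INR (j + m) ^ 2 * ap_majorant m j n).
  { apply Rmult_le_pos; [pose proof (pow2_ge_0 (INR (j + m))); lra| apply ap_majorant_nonneg]. }
  unfold logR_xi. rewrite (ap_index_shift m Hm).
  destruct (ap_index m j n) as [[|[|q]]|] eqn:E;
    try (replace (_ * (_ - _))%C with (RtoC 0) by ring; rewrite Cmod_0, pow_i by lia; exact R0).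
  - apply (ap_index_Some m Hm) in E. rewrite Nat.mul_1_r in E. subst n.
    replace (INR (j + m) * (RtoC (/ INR 1) * w ^ 1 - w * RtoC 0))%C with (INR (j + m) * w)%C
      by (simpl; Cfield).
    rewrite Cmod_mult, Hw, Cmod_R, Rabs_pos_eq, Rmult_1_r by apply pos_INR.
    unfold ap_majorant. replace (INR (j + m) + 1) with (INR (j + m + 1))
      by (rewrite plus_INR; simpl; ring).
    rewrite Rinv_r, Rmult_1_r by (apply pow_nonzero, not_0_INR; lia).
    pose proof (pow2_ge_0 (INR (j + m))). lra.
  - apply (ap_index_Some m Hm) in E.
    assert (Eq : (INR n * (RtoC (/ INR (S (S q))) * w ^ S (S q) - w * (RtoC (/ INR (S q)) * w ^ S q)))%C
               = (RtoC (- (INR n * / ((INR q + 1) * (INR q + 2)))) * w ^ S (S q))%C).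
    { rewrite Cpow_S with (n := S q). rewrite !S_INR. generalize (w ^ S q)%C. intros c.
      pose proof (pos_INR q). Cfield; lra. }
    rewrite Eq, Cmod_mult, Cmod_pow, Hw, pow1, Rmult_1_r, Cmod_R, Rabs_Ropp, Rabs_pos_eq.
    2: { apply Rmult_le_pos; [apply pos_INR|apply Rlt_le, Rinv_0_lt_compat].
         pose proof (pos_INR q); nra. }
    eapply Rle_trans; [apply (inv_consecutive_prod_sq_le _ (INR (j + m))); try apply pos_INR|].
    + replace (INR q + 2) with (INR (S (S q))) by (rewrite !S_INR; ring).
      rewrite <- mult_INR. apply le_INR. nia.
    + apply Rmult_le_compat_l; [pose proof (pow2_ge_0 (INR (j + m))); lra|].
      replace (INR q + 2) with (INR (S (S q))) by (rewrite !S_INR; ring).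
      apply (inv_index_sq_le_ap_majorant m j n (S q) E).
Qed.

Lemma in_l2_Nop_logR_xi_diff j :
  in_l2 (fun n => INR n * (logR_xi j n - w * logR_xi (j + m) n))%C.
Proof.
  apply ex_series_nonneg_le with (fun n => 4 * INR (j + m) ^ 2 * ap_majorant m j n).
  - intros n; split; [apply Cmod_sq_ge0| apply Cmod_Nop_logR_xi_diff_sq_le].
  - apply ex_series_scal_R, ex_series_ap_majorant.
Qed.

Definition dvec (j : nat) : vec := vsub (xi j) (vscal w (xi (j + m))).

Lemma dvec_pair_vec j : dvec j = pair_vec 1 (- w) j.
Proof. apply functional_extensionality; intros n; unfold dvec, pair_vec, vsub, vadd, vscal. ring. Qed.

Lemma Nop_dvec j : app Nop (dvec j) = pair_vec (INR j) (- (w * INR (j + m))) j.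
Proof.
  apply functional_extensionality; intros n; simpl; unfold dvec, pair_vec, vsub, vadd, vscal.
  replace (INR n * (xi j n - w * xi (j + m)%nat n))%C
    with (INR n * xi j n - w * (INR n * xi (j + m)%nat n))%C by ring.
  rewrite !Nop_xi. ring.
Qed.

Lemma ccr_dom_dvec j : ccr_dom lg m w (dvec j).
Proof.
  assert (Sd := pair_vec_finsupp 1 (- w) j). rewrite <- dvec_pair_vec in Sd.
  assert (SNd := pair_vec_finsupp (INR j) (- (w * INR (j + m))) j).
  rewrite <- Nop_dvec in SNd.
  destruct (Log_Lsh_finsupp _ _ Sd) as [L1d [V1d S1d]].
  destruct (Log_Lsh_finsupp _ _ SNd) as [L1Nd _].
  destruct (Log_Rsh_pair_vec 1 (- w) j) as [L2d V2d]. rewrite <- dvec_pair_vec in L2d, V2d.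
  destruct (Log_Rsh_pair_vec (INR j) (- (w * INR (j + m))) j) as [L2Nd _].
  rewrite <- Nop_dvec in L2Nd.
  assert (Td : dom (Lmw lg m w) (dvec j)) by (split; auto).
  assert (Hd : in_l2 (dvec j)) by (rewrite dvec_pair_vec; apply in_l2_pair_vec).
  split; split; auto.
  - split; [apply in_l2_app_Lmw; auto|].
    set (g := (Ci / INR m)%C). set (P := log_psum w (op_pow Lsh m) (dvec j) (S (j + m))).
    set (A := fun n => (INR n * (g * (lg w * dvec j n - P n - lg (Cconj w) * dvec j n)))%C).
    apply in_l2_ext with
      (vadd A (vscal g (fun n => INR n * (logR_xi j n - w * logR_xi (j + m) n))%C)).
    + intros n. unfold A, vadd, vscal. simpl app. unfold vscal, vsub.
      rewrite V1d, V2d. fold P. unfold vadd, vscal, g. ring.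
    + apply in_l2_add; [|apply in_l2_scal, in_l2_Nop_logR_xi_diff].
      apply (in_l2_finsupp _ (S (j + m))). intros n Hn. unfold A, P.
      rewrite Sd, S1d by auto. ring.
  - split; [auto|]. apply (in_l2_finsupp _ _ SNd).
  - split; auto.
Qed.

Lemma ccr_dom_zero : ccr_dom lg m w vzero.
Proof.
  replace vzero with (vscal 0 (dvec 0)); [apply ccr_dom_scal, ccr_dom_dvec|].
  apply functional_extensionality; intros; unfold vscal, vzero; ring.
Qed.

Lemma dvec_neq0 j : dvec j <> vzero.
Proof.
  intros E. apply (f_equal (fun v => v j)) in E. unfold dvec, vsub, vscal, vzero, xi in E.
  rewrite Nat.eqb_refl in E. destruct (Nat.eqb_spec j (j + m)); [lia|].
  replace (RtoC 1 - w * RtoC 0)%C with (RtoC 1) in E by ring.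
  injection E. lra.
Qed.

Definition vsum (f : nat -> vec) (K : nat) : vec := fun n => sum0 (fun k => f k n) K.

Lemma ccr_dom_vsum f K : (forall k, (k < K)%nat -> ccr_dom lg m w (f k)) ->
  ccr_dom lg m w (vsum f K).
Proof.
  intros H. induction K.
  - apply ccr_dom_zero.
  - replace (vsum f (S K)) with (vadd (vsum f K) (f K)) by reflexivity.
    apply ccr_dom_add; [apply IHK; intros; apply H|apply H]; lia.
Qed.

Lemma vsum_dvec_telescope j i :
  vsum (fun l => vscal (w ^ l) (dvec (j + l * m))) i = vsub (xi j) (vscal (w ^ i) (xi (j + m * i))).
Proof.
  induction i; apply functional_extensionality; intros n.
  - unfold vsum, vsub, vscal. simpl. rewrite Nat.mul_0_r, Nat.add_0_r. ring.
  - change (vsum (fun l => vscal (w ^ l) (dvec (j + l * m))) (S i) n)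
      with (vsum (fun l => vscal (w ^ l) (dvec (j + l * m))) i n
            + vscal (w ^ i) (dvec (j + i * m)) n)%C.
    rewrite IHi. unfold dvec, vsub, vscal.
    replace (j + i * m + m)%nat with (j + m * S i)%nat by lia.
    replace (j + i * m)%nat with (j + m * i)%nat by lia. rewrite Cpow_S. ring.
Qed.

(* Averaging the telescoped vectors [xi j - w^i xi (j + m i)], [1 <= i <= M], approximates
   [xi j] to within [1 / sqrt M]. *)
Definition cesaro_xi (M j : nat) : vec :=
  vscal (/ INR M) (vsum (fun i => vsub (xi j) (vscal (w ^ S i) (xi (j + m * S i)))) M).

Lemma ccr_dom_cesaro_xi M j : ccr_dom lg m w (cesaro_xi M j).
Proof.
  apply ccr_dom_scal, ccr_dom_vsum. intros i _. rewrite <- vsum_dvec_telescope.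
  apply ccr_dom_vsum. intros l _. apply ccr_dom_scal, ccr_dom_dvec.
Qed.

Lemma sum0_xi_progression j M n :
  sum0 (fun i => w ^ S i * xi (j + m * S i) n)%C M =
  match ap_index m j n with Some (S i) => if (i <? M)%nat then (w ^ S i)%C else RtoC 0
  | _ => RtoC 0 end.
Proof.
  induction M.
  - simpl. destruct (ap_index m j n) as [[|q]|]; auto.
  - cbn [sum0]. rewrite IHM. unfold xi.
    destruct (ap_index m j n) as [[|q]|] eqn:E.
    + apply (ap_index_Some m Hm) in E. destruct (Nat.eqb_spec n (j + m * S M)); [lia|ring].
    + apply (ap_index_Some m Hm) in E. destruct (Nat.eq_dec q M) as [->|Hq].
      * rewrite E, Nat.eqb_refl, Nat.ltb_irrefl.
        destruct (Nat.ltb_spec M (S M)); [ring|lia].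
      * destruct (Nat.eqb_spec n (j + m * S M)); [nia|].
        destruct (Nat.ltb_spec q M), (Nat.ltb_spec q (S M)); try ring; lia.
    + destruct (Nat.eqb_spec n (j + m * S M)); [|ring].
      exfalso. apply (ap_index_None m Hm j n E (S M)). lia.
Qed.

Lemma xi_sub_cesaro_xi M j n : (1 <= M)%nat ->
  vsub (xi j) (cesaro_xi M j) n =
  (RtoC (/ INR M) * sum0 (fun i => w ^ S i * xi (j + m * S i) n) M)%C.
Proof.
  intros HM. unfold cesaro_xi, vsub, vscal, vsum.
  rewrite (sum0_ext _ (fun i => xi j n + (-1) * (w ^ S i * xi (j + m * S i) n))%C)
    by (intros; ring).
  rewrite sum0_plus, sum0_const, sum0_scal.
  assert (INR M <> 0) by (apply not_0_INR; lia).
  generalize (sum0 (fun i => w ^ S i * xi (j + m * S i) n)%C M) (xi j n). intros a b.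
  Cfield; auto.
Qed.

Lemma Cmod_xi_sub_cesaro_xi_le M j n : (1 <= M)%nat ->
  Cmod (vsub (xi j) (cesaro_xi M j) n) <= / INR M.
Proof.
  intros HM. assert (0 < INR M) by (apply lt_0_INR; lia).
  rewrite xi_sub_cesaro_xi, sum0_xi_progression, Cmod_mult, Cmod_R by auto.
  rewrite Rabs_pos_eq by (apply Rlt_le, Rinv_0_lt_compat; auto).
  rewrite <- (Rmult_1_r (/ INR M)) at 2. apply Rmult_le_compat_l; [apply Rlt_le, Rinv_0_lt_compat; auto|].
  destruct (ap_index m j n) as [[|i]|]; try (rewrite Cmod_0; lra).
  destruct (Nat.ltb_spec i M); [rewrite Cmod_pow, Hw, pow1|rewrite Cmod_0]; lra.
Qed.

Lemma xi_sub_cesaro_xi_finsupp M j n : (1 <= M)%nat -> (j + m * M < n)%nat ->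
  vsub (xi j) (cesaro_xi M j) n = RtoC 0.
Proof.
  intros HM Hn. rewrite xi_sub_cesaro_xi, sum0_xi_progression by auto.
  destruct (ap_index m j n) as [[|i]|] eqn:E; try ring.
  apply (ap_index_Some m Hm) in E. destruct (Nat.ltb_spec i M); [nia|ring].
Qed.

Definition cesaro_residual (x : vec) (N M : nat) : vec :=
  fun n => sum0 (fun j => x j * vsub (xi j) (cesaro_xi M j) n)%C N.

Lemma Series_cesaro_residual_le x N M : (1 <= M)%nat ->
  in_l2 (cesaro_residual x N M) /\
  Series (fun n => Cmod (cesaro_residual x N M n) ^ 2) <=
  (INR N + INR m) * rsum0 (fun j => Cmod (x j)) N ^ 2 / INR M.
Proof.
  intros HM. assert (HMr : 0 < INR M) by (apply lt_0_INR; lia).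
  set (B := rsum0 (fun j => Cmod (x j)) N).
  assert (HB : 0 <= B) by (apply rsum0_nonneg; intros; apply Cmod_ge_0).
  assert (Hz : forall n, (N + m * M <= n)%nat -> cesaro_residual x N M n = RtoC 0).
  { intros n Hn. unfold cesaro_residual.
    rewrite (sum0_ext _ (fun _ => RtoC 0 * RtoC 0)%C), sum0_scal; [ring|].
    intros j Hj. rewrite xi_sub_cesaro_xi_finsupp by (auto; nia). ring. }
  assert (Hb : forall n, Cmod (cesaro_residual x N M n) <= B / INR M).
  { intros n. eapply Rle_trans; [apply Cmod_sum0_le|].
    unfold B, Rdiv. rewrite Rmult_comm, <- rsum0_scal. apply rsum0_le. intros j.
    rewrite Cmod_mult, Rmult_comm. apply Rmult_le_compat_r; [apply Cmod_ge_0|].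
    apply Cmod_xi_sub_cesaro_xi_le; auto. }
  split; [apply (in_l2_finsupp _ (N + m * M)); auto|].
  eapply Rle_trans.
  { apply (Series_finsupp_le _ (N + m * M) ((B / INR M) ^ 2)).
    - intros n; split; [apply Cmod_sq_ge0|]. apply pow_incr. split; [apply Cmod_ge_0|auto].
    - intros n Hn. rewrite Hz, Cmod_0 by auto. ring. }
  rewrite plus_INR, mult_INR.
  replace ((INR N + INR m * INR M) * (B / INR M) ^ 2)
    with ((INR N / INR M + INR m) * B ^ 2 / INR M) by (field; lra).
  unfold Rdiv. apply Rmult_le_compat_r; [left; apply Rinv_0_lt_compat; auto|].
  apply Rmult_le_compat_r; [apply pow2_ge_0|].
  assert (INR N * / INR M <= INR N); [|lra].
  rewrite <- (Rmult_1_r (INR N)) at 2. apply Rmult_le_compat_l; [apply pos_INR|].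
  rewrite <- Rinv_1. apply Rinv_le_contravar; [lra|]. apply (le_INR 1); lia.
Qed.

Lemma sum0_xi_coord (x : vec) N n :
  sum0 (fun j => x j * xi j n)%C N = if (n <? N)%nat then x n else RtoC 0.
Proof.
  induction N; simpl; [destruct (Nat.ltb_spec n 0); [lia|auto]|].
  rewrite IHN. unfold xi. destruct (Nat.eqb_spec n N).
  - subst. destruct (Nat.ltb_spec N N), (Nat.ltb_spec N (S N)); try lia. ring.
  - destruct (Nat.ltb_spec n N), (Nat.ltb_spec n (S N)); try lia; ring.
Qed.

Definition vtail (N : nat) (x : vec) : vec := fun n => if (n <? N)%nat then RtoC 0 else x n.

Lemma Series_vtail_lt (x : vec) N d : in_l2 x ->
  Series (fun k => Cmod (x (N + k)%nat) ^ 2) < d -> in_l2 (vtail N x) /\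
  Series (fun n => Cmod (vtail N x n) ^ 2) < d.
Proof.
  intros Hx HN. split.
  - apply ex_series_nonneg_le with (2 := Hx). intros n; split; [apply Cmod_sq_ge0|].
    unfold vtail. destruct (Nat.ltb_spec n N); [|lra].
    rewrite Cmod_0, pow_i by lia. apply Cmod_sq_ge0.
  - rewrite (Series_incr_n_aux _ N).
    + rewrite (Series_ext _ (fun k => Cmod (x (N + k)%nat) ^ 2)); auto.
      intros k. unfold vtail. destruct (Nat.ltb_spec (N + k) N); [lia|auto].
    + intros k Hk. unfold vtail. destruct (Nat.ltb_spec k N); [|lia].
      rewrite Cmod_0. simpl; ring.
Qed.

Lemma vsub_vsum_cesaro_xi (x : vec) N M :
  vsub x (vsum (fun j => vscal (x j) (cesaro_xi M j)) N) = vadd (vtail N x) (cesaro_residual x N M).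
Proof.
  apply functional_extensionality; intros n. unfold vsub, vadd, vtail, vsum, vscal.
  unfold cesaro_residual, vsub.
  rewrite (sum0_ext (fun j => x j * (xi j n - cesaro_xi M j n))%C
    (fun j => x j * xi j n + (-1) * (x j * cesaro_xi M j n))%C) by (intros; ring).
  rewrite sum0_plus, sum0_scal, sum0_xi_coord.
  destruct (Nat.ltb_spec n N); ring.
Qed.

(* The tail of [x] beyond [N] is small for large [N]; for fixed [N] the residual is small
   for large [M]. *)
Lemma dense_ccr_dom : dense (ccr_dom lg m w).
Proof.
  intros x Hx eps Heps.
  set (d := eps / (2 * sqrt 2)).
  assert (Hs2 : 0 < sqrt 2) by (apply sqrt_lt_R0; lra).
  assert (Hd : 0 < d) by (unfold d; apply Rdiv_lt_0_compat; lra).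
  assert (Hd2 : 0 < d ^ 2) by (apply pow_lt; auto).
  destruct (Series_tail_lt (fun n => Cmod (x n) ^ 2) (fun _ => Cmod_sq_ge0 _) Hx _ Hd2)
    as [N HN].
  destruct (Series_vtail_lt x N _ Hx (HN N (Nat.le_refl N))) as [Ha Sa].
  set (B := rsum0 (fun j => Cmod (x j)) N).
  destruct (INR_unbounded ((INR N + INR m) * B ^ 2 / d ^ 2)) as [M0 HM0].
  set (M := S M0). assert (HM : (1 <= M)%nat) by (unfold M; lia).
  assert (HMr : 0 < INR M) by (apply lt_0_INR; lia).
  destruct (Series_cesaro_residual_le x N M HM) as [Hq Sq].
  exists (vsum (fun j => vscal (x j) (cesaro_xi M j)) N). split.
  { apply ccr_dom_vsum. intros j _. apply ccr_dom_scal, ccr_dom_cesaro_xi. }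
  rewrite vsub_vsum_cesaro_xi. eapply Rle_lt_trans; [apply l2norm_add_le; auto|].
  assert (l2norm (vtail N x) < d) by (apply l2norm_lt_of_Series; auto).
  assert (l2norm (cesaro_residual x N M) < d).
  { apply l2norm_lt_of_Series; auto. eapply Rle_lt_trans; [apply Sq|]. fold B.
    apply Rmult_lt_reg_r with (INR M / d ^ 2); [apply Rdiv_lt_0_compat; auto|].
    replace ((INR N + INR m) * B ^ 2 / INR M * (INR M / d ^ 2))
      with ((INR N + INR m) * B ^ 2 / d ^ 2) by (field; lra).
    replace (d ^ 2 * (INR M / d ^ 2)) with (INR M) by (field; lra).
    unfold M. rewrite S_INR. lra. }
  replace eps with (sqrt 2 * (d + d)) by (unfold d; field; lra).
  apply Rmult_lt_compat_l; lra.
Qed.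
End Core.

Lemma dense_mono (D D' : vec -> Prop) : (forall x, D x -> D' x) -> dense D -> dense D'.
Proof.
  intros HD Hd x Hx eps Heps. destruct (Hd x Hx eps Heps) as [y [Dy Hy]].
  exists y. split; auto.
Qed.

Theorem mainTheorem18 :
  forall (lg : C -> C), is_log lg ->
  forall (w : C) (m : nat), Cmod w = 1 -> (1 <= m)%nat ->
  time_operator Nop (Lmw lg m w)
    (fun x => dom (op_comp Nop (Lmw lg m w)) x /\ dom (op_comp (Lmw lg m w) Nop) x) /\
  dense (fun x => dom (op_comp Nop (Lmw lg m w)) x /\ dom (op_comp (Lmw lg m w) Nop) x).
Proof.
  intros lg Hl w m Hw Hm.
  assert (Hdense := dense_ccr_dom lg m w Hw Hm).
  split; [|exact Hdense].
  split; [split|split; [split; [|split]|split; [|split]]].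
  - apply (dense_mono _ _ (fun x Hx => proj1 (proj1 Hx)) Hdense).
  - apply Lmw_symmetric; auto.
  - apply (ccr_dom_zero lg m w Hw Hm).
  - apply ccr_dom_add.
  - apply ccr_dom_scal.
  - exists (dvec m w 0). split; [apply (ccr_dom_dvec lg m w Hw Hm)|apply dvec_neq0; auto].
  - intros x Hx. exact Hx.
  - apply (Lmw_commutator lg m w Hw Hm).
Qed.
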